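(* There is $t_0>0$ such that for $-t_0<t<0$ one has $$|g(\Phi_t(w),z)|\approx|g(w,z)|+|t|\qquad\text{for all } w,z\in bD,$$ with implicit constants independent of $t$, $w$, $z$. In particular $|g(\Phi_t(w),z)|\gtrsim|g(w,z)|$ for $w,z\in bD$ and such $t$.
   Context: Let $n\ge2$ and $D\subset\mathbb C^n$ be a bounded strongly pseudoconvex domain of class $C^2$ with a $C^2$ strictly plurisubharmonic defining function $\rho$ ($D=\{\rho<0\}$, $\nabla\rho\ne0$ on $bD$), and $D_t=\{\rho+t<0\}$. $\Phi_t$ is the time-$t$ flow (defined near $bD$ for small $|t|$) of the $C^1$ vector field $-\nabla\rho/|\nabla\rho|^2$, so that $\rho(\Phi_t(x))=\rho(x)-t$ and $\Phi_t$ is a $C^1$ bijection of $bD$ onto $bD_t$ (for $t<0$, $\Phi_t(w)$ lies outside $\bar D$ at distance comparable to $|t|$); its first order expansion is $\Phi_t(w)=w+t\,\mathbb N_w+o(|t|)$ uniformly in $w\in bD$, where $\mathbb N_w=-\nabla\rho(w)/|\nabla\rho(w)|^2$. $g(w,z)$ is the (fixed parameter) denominator function of the Lanzani–Stein Cauchy kernel: holomorphic in $z$, $C^1$ in $w$ on a neighborhood of $\bar D$, and for $w$ near $z$ of the form $g(w,z)=\langle\partial\rho(w),w-z\rangle+Q_w(w-z)$, where $Q_w$ is a quadratic form in $w-z$ with coefficients continuous in $w$ (a smooth approximation of the holomorphic Hessian term of the Levi polynomial); it satisfies $\mathrm{Re}\,g(w,z)\ge c(-\rho(z)+|w-z|^2)$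 for $z\in\bar D$, $w\in bD$. Known fact (Lanzani–Stein): with $\nu_z$ the inner unit normal at $z\in bD$, $|g(w,z+\delta\nu_z)|\approx|g(w,z)|+\delta$ for $w,z\in bD$ and all sufficiently small $\delta>0$. *)

(* C^n is modelled as R^(2n): a point is  x : nat -> R  whose coordinates
   of index >= 2n vanish; the complex coordinate j (j < n) is
   z_j = x (2j) + i x (2j+1). *)
From Stdlib Require Import Reals Lra.
Open Scope R_scope.

Definition pt := nat -> R.

Fixpoint sumR (k : nat) (f : nat -> R) : R :=
  match k with O => 0 | S k' => sumR k' f + f k' end.

Definition is_pt (m : nat) (x : pt) : Prop := forall i, (m <= i)%nat -> x i = 0.
Definition vadd (x y : pt) : pt := fun i => x i + y i.
Definition vsub (x y : pt) : pt := fun i => x i - y i.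
Definition vscal (a : R) (x : pt) : pt := fun i => a * x i.
Definition dot (m : nat) (x y : pt) : R := sumR m (fun i => x i * y i).
Definition vnorm (m : nat) (x : pt) : R := sqrt (dot m x x).

(* multiplication by i (complex structure J) on R^m, m = 2n *)
Definition cstr (m : nat) (v : pt) : pt :=
  fun i => if Nat.ltb i m then (if Nat.even i then - v (S i) else v (pred i)) else 0.

Definition Cpx := (R * R)%type.
Definition Cadd (a b : Cpx) : Cpx := (fst a + fst b, snd a + snd b).
Definition Cmul (a b : Cpx) : Cpx :=
  (fst a * fst b - snd a * snd b, fst a * snd b + snd a * fst b).
Definition Cabs (a : Cpx) : R := sqrt (fst a * fst a + snd a * snd a).
Fixpoint Csum (k : nat) (f : nat -> Cpx) : Cpx :=
  match k with O => (0, 0) | S k' => Cadd (Csum k' f) (f k') end.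

Definition zc (x : pt) (j : nat) : Cpx := (x (2 * j)%nat, x (2 * j + 1)%nat).

Definition open_in (m : nat) (U : pt -> Prop) : Prop :=
  (forall x, U x -> is_pt m x) /\
  (forall x, U x -> exists r, 0 < r /\
     forall y, is_pt m y -> vnorm m (vsub y x) < r -> U y).

Definition closure (m : nat) (S : pt -> Prop) (x : pt) : Prop :=
  is_pt m x /\ forall eps, 0 < eps -> exists y, S y /\ vnorm m (vsub y x) < eps.

Definition has_grad (m : nat) (f : pt -> R) (x gr : pt) : Prop :=
  is_pt m gr /\
  forall eps, 0 < eps -> exists del, 0 < del /\
    forall y, is_pt m y -> vnorm m (vsub y x) < del ->
      Rabs (f y - f x - dot m gr (vsub y x)) <= eps * vnorm m (vsub y x).

Definition cont_on (m : nat) (S : pt -> Prop) (f : pt -> R) : Prop :=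
  forall x, S x -> forall eps, 0 < eps -> exists del, 0 < del /\
    forall y, S y -> vnorm m (vsub y x) < del -> Rabs (f y - f x) < eps.

Definition cont2_on (m : nat) (S : pt -> Prop) (f : pt -> pt -> R) : Prop :=
  forall w z, S w -> S z -> forall eps, 0 < eps -> exists del, 0 < del /\
    forall w' z', S w' -> S z' -> vnorm m (vsub w' w) < del ->
      vnorm m (vsub z' z) < del -> Rabs (f w' z' - f w z) < eps.

Definition C2_on (m : nat) (U : pt -> Prop) (rho : pt -> R)
    (grad : pt -> pt) (hess : pt -> nat -> pt) : Prop :=
  (forall x, U x -> has_grad m rho x (grad x)) /\
  (forall x i, U x -> (i < m)%nat -> has_grad m (fun y => grad y i) x (hess x i)) /\
  (forall i j, (i < m)%nat -> (j < m)%nat -> cont_on m U (fun y => hess y i j)).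

(* Levi form (complex Hessian) in real terms, times 4:
   sum_{j,k} rho_{j kbar} v_j conj(v_k) = 1/4 (D^2 rho(v,v) + D^2 rho(Jv,Jv)) *)
Definition levi (m : nat) (hess : pt -> nat -> pt) (x v : pt) : R :=
  sumR m (fun i => sumR m (fun j =>
     hess x i j * (v i * v j + cstr m v i * cstr m v j))).

Definition strictly_psh_on (m : nat) (U : pt -> Prop) (hess : pt -> nat -> pt) : Prop :=
  forall x, U x -> forall v, is_pt m v -> 0 < vnorm m v -> 0 < levi m hess x v.

Definition Dom (U : pt -> Prop) (rho : pt -> R) (x : pt) : Prop := U x /\ rho x < 0.
Definition Dbar (n : nat) (U : pt -> Prop) (rho : pt -> R) : pt -> Prop :=
  closure (2 * n) (Dom U rho).
Definition bD (n : nat) (U : pt -> Prop) (rho : pt -> R) (x : pt) : Prop :=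
  Dbar n U rho x /\ ~ Dom U rho x.

Definition path_connected (m : nat) (S : pt -> Prop) : Prop :=
  forall x y, S x -> S y -> exists p : R -> pt,
    p 0 = x /\ p 1 = y /\ (forall s, 0 <= s <= 1 -> S (p s)) /\
    (forall s, 0 <= s <= 1 -> forall eps, 0 < eps -> exists del, 0 < del /\
       forall s', 0 <= s' <= 1 -> Rabs (s' - s) < del ->
         vnorm m (vsub (p s') (p s)) < eps).

(* D = {rho < 0} (rho defined on the open set U containing the closure of D)
   is a bounded strongly pseudoconvex domain of class C^2 with C^2 strictly
   psh defining function rho, grad rho <> 0 on bD *)
Definition SPC_setup (n : nat) (U : pt -> Prop) (rho : pt -> R)
    (grad : pt -> pt) (hess : pt -> nat -> pt) : Prop :=
  let m := (2 * n)%nat in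
  open_in m U /\ C2_on m U rho grad hess /\ strictly_psh_on m U hess /\
  (exists x, Dom U rho x) /\ path_connected m (Dom U rho) /\
  (exists M, forall x, Dom U rho x -> vnorm m x <= M) /\
  (forall x, Dbar n U rho x -> U x) /\
  (forall x, bD n U rho x -> 0 < vnorm m (grad x)).

Definition Nfield (m : nat) (grad : pt -> pt) (x : pt) : pt :=
  vscal (- / dot m (grad x) (grad x)) (grad x).

Definition is_flow (n : nat) (U : pt -> Prop) (rho : pt -> R)
    (grad : pt -> pt) (Phi : R -> pt -> pt) : Prop :=
  let m := (2 * n)%nat in
  exists T (W : pt -> Prop), 0 < T /\ open_in m W /\
    (forall x, bD n U rho x -> W x) /\ (forall x, W x -> U x) /\
    forall x, W x -> Phi 0 x = x /\
      forall t, -T < t < T ->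
        U (Phi t x) /\ 0 < vnorm m (grad (Phi t x)) /\
        forall i, derivable_pt_lim (fun s => Phi s x i) t (Nfield m grad (Phi t x) i).

(* first-order expansion Phi_t(w) = w + t N_w + o(|t|) uniformly on bD (stated fact) *)
Definition flow_expansion (n : nat) (U : pt -> Prop) (rho : pt -> R)
    (grad : pt -> pt) (Phi : R -> pt -> pt) : Prop :=
  let m := (2 * n)%nat in
  forall eps, 0 < eps -> exists del, 0 < del /\
    forall t w, Rabs t < del -> bD n U rho w ->
      vnorm m (vsub (Phi t w) (vadd w (vscal t (Nfield m grad w)))) <= eps * Rabs t.

(* <d rho(w), w - z> = sum_j (d rho / d w_j)(w) (w_j - z_j),
   d rho/d w_j = 1/2 (d rho/d x_j - i d rho/d y_j) *)
Definition drho_j (grad : pt -> pt) (w : pt) (j : nat) : Cpx :=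
  (/ 2 * grad w (2 * j)%nat, - (/ 2 * grad w (2 * j + 1)%nat)).
Definition pair_drho (n : nat) (grad : pt -> pt) (w z : pt) : Cpx :=
  Csum n (fun j => Cmul (drho_j grad w j) (zc (vsub w z) j)).
Definition Qform (n : nat) (a : pt -> nat -> nat -> Cpx) (w zeta : pt) : Cpx :=
  Csum n (fun j => Csum n (fun k => Cmul (a w j k) (Cmul (zc zeta j) (zc zeta k)))).

Definition nu (m : nat) (grad : pt -> pt) (z : pt) : pt :=
  vscal (- / vnorm m (grad z)) (grad z).

Definition LS_denominator (n : nat) (U : pt -> Prop) (rho : pt -> R)
    (grad : pt -> pt) (G : pt -> Prop) (g : pt -> pt -> Cpx) : Prop :=
  let m := (2 * n)%nat in
  open_in m G /\ (forall x, Dbar n U rho x -> G x) /\ (forall x, G x -> U x) /\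
  cont2_on m G (fun w z => fst (g w z)) /\ cont2_on m G (fun w z => snd (g w z)) /\
  (* holomorphic in z: real differentiable + Cauchy-Riemann *)
  (forall w z, G w -> G z -> exists gu gv,
      has_grad m (fun y => fst (g w y)) z gu /\
      has_grad m (fun y => snd (g w y)) z gv /\
      (forall i, gv i = cstr m gu i)) /\
  (exists Gu Gv : pt -> pt -> pt,
      (forall w z, G w -> G z ->
         has_grad m (fun y => fst (g y z)) w (Gu w z) /\
         has_grad m (fun y => snd (g y z)) w (Gv w z)) /\
      (forall i, (i < m)%nat ->
         cont2_on m G (fun w z => Gu w z i) /\ cont2_on m G (fun w z => Gv w z i))) /\
  (exists r (a : pt -> nat -> nat -> Cpx), 0 < r /\
      (forall j k, (j < n)%nat -> (k < n)%nat ->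
         cont_on m G (fun w => fst (a w j k)) /\ cont_on m G (fun w => snd (a w j k))) /\
      (forall w z, G w -> G z -> vnorm m (vsub w z) < r ->
         g w z = Cadd (pair_drho n grad w z) (Qform n a w (vsub w z)))) /\
  (exists c, 0 < c /\ forall w z, Dbar n U rho z -> bD n U rho w ->
      fst (g w z) >= c * (- rho z + vnorm m (vsub w z) ^ 2)) /\
  (* known fact (Lanzani--Stein): |g(w, z + delta nu_z)| ~ |g(w,z)| + delta *)
  (exists d0 A B, 0 < d0 /\ 0 < A /\ 0 < B /\
      forall w z delta, bD n U rho w -> bD n U rho z -> 0 < delta < d0 ->
        A * (Cabs (g w z) + delta) <= Cabs (g w (vadd z (vscal delta (nu m grad z)))) /\
        Cabs (g w (vadd z (vscal delta (nu m grad z)))) <= B * (Cabs (g w z) + delta)).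

(* Near the diagonal, g(w,z) = <d rho(w), w - z> + Q_w(w - z), and moving w to
   Phi_t(w) = w + t N_w + o(|t|) changes the linear term by exactly <d rho(w), t N_w> = -t/2 = |t|/2,
   a positive real number.  All other changes are small multiples of |t| and of
   |w - z|^2 <= Re g(w,z) / c, because d rho and the coefficients of Q_w are uniformly continuous
   near the compact set bD.  As Re g(w,z) >= 0, adding |t|/2 plus such an error to g(w,z) gives a
   number of modulus comparable to |g(w,z)| + |t|.  Away from the diagonal, |g(w,z)| >= c |w - z|^2
   is bounded below and the uniform continuity of g suffices. *)

From Stdlib Require Import Reals Lra Lia Psatz ZArith List.
From Stdlib Require Import Classical ClassicalChoice FunctionalExtensionality.
Open Scope R_scope.

Lemma Rabs_le_between x a : Rabs x <= a -> - a <= x <= a.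
Proof. intros H. pose proof (Rle_abs x). pose proof (Rle_abs (- x)). rewrite Rabs_Ropp in *. lra. Qed.

Lemma Rabs_sub_lt_half x y x0 eta :
  Rabs (x - x0) < eta / 2 -> Rabs (y - x0) < eta / 2 -> Rabs (x - y) < eta.
Proof.
  intros Hx Hy. apply Rabs_def2 in Hx, Hy. apply Rabs_def1; lra.
Qed.

Lemma sumR_ext k f h : (forall i, (i < k)%nat -> f i = h i) -> sumR k f = sumR k h.
Proof.
  induction k as [|k IH]; simpl; intros H; [reflexivity|].
  rewrite IH by (intros; apply H; lia). rewrite H by lia. reflexivity.
Qed.

Lemma sumR_le k f h : (forall i, (i < k)%nat -> f i <= h i) -> sumR k f <= sumR k h.
Proof.
  induction k as [|k IH]; simpl; intros H; [lra|].
  apply Rplus_le_compat; [apply IH; intros; apply H|apply H]; lia.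
Qed.

Lemma sumR_const k c : sumR k (fun _ => c) = INR k * c.
Proof. induction k as [|k IH]; simpl sumR; [simpl; lra|]. rewrite S_INR; lra. Qed.

Lemma sumR_nonneg k f : (forall i, (i < k)%nat -> 0 <= f i) -> 0 <= sumR k f.
Proof.
  intros H. apply Rle_trans with (sumR k (fun _ => 0)).
  - rewrite sumR_const; lra.
  - apply sumR_le, H.
Qed.

Lemma sumR_le_const k f c : (forall i, (i < k)%nat -> f i <= c) -> sumR k f <= INR k * c.
Proof. intros H. rewrite <- sumR_const. apply sumR_le, H. Qed.

Lemma sumR_scal k a f : sumR k (fun i => a * f i) = a * sumR k f.
Proof. induction k; simpl; lra. Qed.

Lemma sumR_plus k f h : sumR k (fun i => f i + h i) = sumR k f + sumR k h.
Proof. induction k; simpl; lra. Qed.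

Lemma sumR_abs k f : Rabs (sumR k f) <= sumR k (fun i => Rabs (f i)).
Proof.
  induction k as [|k IH]; simpl; [rewrite Rabs_R0; lra|].
  eapply Rle_trans; [apply Rabs_triang|lra].
Qed.

Lemma sumR_term k f i : (forall j, (j < k)%nat -> 0 <= f j) -> (i < k)%nat -> f i <= sumR k f.
Proof.
  induction k as [|k IH]; intros H Hi; [lia|]. simpl.
  assert (0 <= f k) by (apply H; lia).
  destruct (Nat.eq_dec i k) as [->|Hik].
  - assert (0 <= sumR k f) by (apply sumR_nonneg; intros; apply H; lia). lra.
  - assert (f i <= sumR k f) by (apply IH; [intros; apply H|]; lia). lra.
Qed.

Lemma sumR_double n f :
  sumR (2 * n) f = sumR n (fun j => f (2 * j)%nat + f (2 * j + 1)%nat).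
Proof.
  induction n as [|n IH]; [reflexivity|].
  replace (2 * S n)%nat with (S (S (2 * n))) by lia.
  change (sumR (2 * n) f + f (2 * n)%nat + f (S (2 * n))
          = sumR n (fun j => f (2 * j)%nat + f (2 * j + 1)%nat) + (f (2 * n)%nat + f (2 * n + 1)%nat)).
  rewrite IH. replace (S (2 * n)) with (2 * n + 1)%nat by lia. lra.
Qed.

(** * Euclidean geometry of [R^m] *)

Lemma dot_sym m x y : dot m x y = dot m y x.
Proof. apply sumR_ext. intros; ring. Qed.

Lemma dot_self_nonneg m x : 0 <= dot m x x.
Proof. apply sumR_nonneg. intros; nra. Qed.

Lemma dot_add_l m x y z : dot m (vadd x y) z = dot m x z + dot m y z.
Proof. unfold dot, vadd. rewrite <- sumR_plus. apply sumR_ext; intros; ring. Qed.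

Lemma dot_add_r m x y z : dot m z (vadd x y) = dot m z x + dot m z y.
Proof. rewrite dot_sym, dot_add_l, (dot_sym m x), (dot_sym m y). ring. Qed.

Lemma dot_scal_r m x a y : dot m x (vscal a y) = a * dot m x y.
Proof. unfold dot, vscal. rewrite <- sumR_scal. apply sumR_ext; intros; ring. Qed.

Lemma vnorm_nonneg m x : 0 <= vnorm m x.
Proof. apply sqrt_pos. Qed.

Lemma vnorm_sq m x : vnorm m x * vnorm m x = dot m x x.
Proof. apply sqrt_sqrt, dot_self_nonneg. Qed.

Lemma vnorm_ge_coord m v i : (i < m)%nat -> Rabs (v i) <= vnorm m v.
Proof.
  intros Hi. unfold vnorm. rewrite <- sqrt_Rsqr_abs. apply sqrt_le_1_alt.
  unfold Rsqr, dot. apply (sumR_term m (fun i => v i * v i)); auto. intros; nra.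
Qed.

Lemma vnorm_le_sum_abs m v : vnorm m v <= sumR m (fun i => Rabs (v i)).
Proof.
  assert (Hpos : forall k, 0 <= sumR k (fun i => Rabs (v i)))
    by (intros; apply sumR_nonneg; intros; apply Rabs_pos).
  unfold vnorm. rewrite <- (sqrt_Rsqr _ (Hpos m)). apply sqrt_le_1_alt. unfold Rsqr, dot.
  induction m as [|m IH]; simpl; [lra|].
  pose proof (Hpos m). pose proof (Rabs_pos (v m)).
  assert (Rabs (v m) * Rabs (v m) = v m * v m) by (rewrite <- Rabs_mult; apply Rabs_right; nra).
  nra.
Qed.

Lemma dot_sq_le m x y : dot m x y * dot m x y <= dot m x x * dot m y y.
Proof.
  unfold dot. induction m as [|m IH]; simpl; [lra|].
  set (A := sumR m (fun i => x i * x i)) in *. set (B := sumR m (fun i => y i * y i)) in *.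
  set (C := sumR m (fun i => x i * y i)) in *.
  assert (HA : 0 <= A) by (apply sumR_nonneg; intros; nra).
  assert (HB : 0 <= B) by (apply sumR_nonneg; intros; nra).
  set (a := x m). set (b := y m).
  (* the cross term [2abC] is dominated using [C^2 <= AB] *)
  assert (a * a * B + b * b * A - 2 * a * b * C >= 0).
  { destruct (Req_dec A 0) as [HA0|HA0].
    - rewrite HA0 in *. assert (HC : C = 0) by nra. rewrite HC. nra.
    - assert (Heq : A * (a * a * B + b * b * A - 2 * a * b * C)
              = (b * A - a * C) * (b * A - a * C) + a * a * (A * B - C * C)) by ring.
      assert (0 <= a * a * (A * B - C * C)) by (apply Rmult_le_pos; nra).
      apply Rle_ge, (Rmult_le_reg_l A); [lra|].
      rewrite Rmult_0_r, Heq. pose proof (Rle_0_sqr (b * A - a * C)). unfold Rsqr in *. lra. }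
  nra.
Qed.

Lemma cauchy_schwarz m x y : Rabs (dot m x y) <= vnorm m x * vnorm m y.
Proof.
  unfold vnorm. rewrite <- sqrt_mult by apply dot_self_nonneg.
  rewrite <- sqrt_Rsqr_abs. apply sqrt_le_1_alt. apply dot_sq_le.
Qed.

Lemma vnorm_triang m x y : vnorm m (vadd x y) <= vnorm m x + vnorm m y.
Proof.
  pose proof (vnorm_nonneg m x). pose proof (vnorm_nonneg m y). pose proof (vnorm_nonneg m (vadd x y)).
  apply Rsqr_incr_0_var; unfold Rsqr; try lra.
  rewrite vnorm_sq, dot_add_l, !dot_add_r, (dot_sym m y x), <- !vnorm_sq.
  pose proof (Rabs_le_between _ _ (cauchy_schwarz m x y)). nra.
Qed.

Lemma vnorm_scal m a x : vnorm m (vscal a x) = Rabs a * vnorm m x.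
Proof.
  unfold vnorm, dot, vscal. rewrite <- (sqrt_Rsqr (Rabs a)) by apply Rabs_pos.
  rewrite <- sqrt_mult by (apply Rle_0_sqr || (apply sumR_nonneg; intros; nra)).
  f_equal. rewrite <- Rsqr_abs. unfold Rsqr. rewrite <- sumR_scal. apply sumR_ext; intros; ring.
Qed.

Lemma vsub_swap x y : vsub x y = vscal (-1) (vsub y x).
Proof. apply functional_extensionality; intros; unfold vscal, vsub; ring. Qed.

Lemma vnorm_sub_sym m x y : vnorm m (vsub x y) = vnorm m (vsub y x).
Proof. rewrite vsub_swap, vnorm_scal, Rabs_left by lra. ring. Qed.

Lemma vsub_chain x y z : vsub x z = vadd (vsub x y) (vsub y z).
Proof. apply functional_extensionality; intros; unfold vadd, vsub; ring. Qed.

Lemma vnorm_sub_triang m x y z : vnorm m (vsub x z) <= vnorm m (vsub x y) + vnorm m (vsub y z).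
Proof. rewrite (vsub_chain x y z). apply vnorm_triang. Qed.

Lemma vnorm_le_add_sub m x y : vnorm m x <= vnorm m y + vnorm m (vsub x y).
Proof.
  replace x with (vadd y (vsub x y)) at 1 by
    (apply functional_extensionality; intros; unfold vadd, vsub; ring).
  apply vnorm_triang.
Qed.

Lemma vnorm_diff_le m x y : Rabs (vnorm m x - vnorm m y) <= vnorm m (vsub x y).
Proof.
  pose proof (vnorm_le_add_sub m x y). pose proof (vnorm_le_add_sub m y x) as Hyx.
  rewrite vnorm_sub_sym in Hyx. apply Rabs_le. lra.
Qed.

Lemma dot_abs_le m x y : Rabs (dot m x y) <= sumR m (fun i => Rabs (x i)) * vnorm m y.
Proof.
  eapply Rle_trans; [apply sumR_abs|]. rewrite Rmult_comm, <- sumR_scal.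
  apply sumR_le. intros i Hi. rewrite Rabs_mult.
  pose proof (vnorm_ge_coord m y i Hi). pose proof (Rabs_pos (x i)). nra.
Qed.

Lemma is_pt_vsub m x y : is_pt m x -> is_pt m y -> is_pt m (vsub x y).
Proof. unfold is_pt, vsub; intros Hx Hy i Hi. rewrite Hx, Hy by auto; ring. Qed.

Lemma is_pt_vadd m x y : is_pt m x -> is_pt m y -> is_pt m (vadd x y).
Proof. unfold is_pt, vadd; intros Hx Hy i Hi. rewrite Hx, Hy by auto; ring. Qed.

Lemma is_pt_vscal m a x : is_pt m x -> is_pt m (vscal a x).
Proof. unfold is_pt, vscal; intros Hx i Hi. rewrite Hx by auto; ring. Qed.

(** * Complex arithmetic *)

Definition Csub (a b : Cpx) : Cpx := (fst a - fst b, snd a - snd b).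

Lemma Cpx_eq (a b : Cpx) : fst a = fst b -> snd a = snd b -> a = b.
Proof. destruct a, b; simpl; intros; subst; reflexivity. Qed.

Lemma Cadd_Csub (a b : Cpx) : Cadd a (Csub b a) = b.
Proof. apply Cpx_eq; unfold Cadd, Csub; simpl; ring. Qed.

Lemma Cabs_nonneg a : 0 <= Cabs a.
Proof. apply sqrt_pos. Qed.

Lemma Cabs_sq a : Cabs a * Cabs a = fst a * fst a + snd a * snd a.
Proof. apply sqrt_sqrt. nra. Qed.

Lemma Cabs_ge_fst a : Rabs (fst a) <= Cabs a.
Proof. unfold Cabs. rewrite <- sqrt_Rsqr_abs. apply sqrt_le_1_alt. unfold Rsqr. nra. Qed.

Lemma Cabs_le_abs_sum a : Cabs a <= Rabs (fst a) + Rabs (snd a).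
Proof.
  pose proof (Rabs_pos (fst a)). pose proof (Rabs_pos (snd a)).
  unfold Cabs. rewrite <- (sqrt_Rsqr (Rabs (fst a) + Rabs (snd a))) by lra.
  apply sqrt_le_1_alt. unfold Rsqr.
  rewrite <- (Rabs_right (fst a * fst a)), <- (Rabs_right (snd a * snd a)), !Rabs_mult by nra.
  nra.
Qed.

Lemma Cabs_mul a b : Cabs (Cmul a b) = Cabs a * Cabs b.
Proof. unfold Cabs, Cmul. simpl. rewrite <- sqrt_mult by nra. f_equal. ring. Qed.

Lemma Cabs_conj a : Cabs (fst a, - snd a) = Cabs a.
Proof. unfold Cabs; simpl. f_equal; ring. Qed.

Lemma Cabs_triang a b : Cabs (Cadd a b) <= Cabs a + Cabs b.
Proof.
  pose proof (Cabs_nonneg a). pose proof (Cabs_nonneg b). pose proof (Cabs_nonneg (Cadd a b)).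
  apply Rsqr_incr_0_var; [|lra]. unfold Rsqr.
  replace ((Cabs a + Cabs b) * (Cabs a + Cabs b))
    with (Cabs a * Cabs a + Cabs b * Cabs b + 2 * (Cabs a * Cabs (fst b, - snd b)))
    by (rewrite Cabs_conj; ring).
  (* [Re (a * conj b)] is the cross term of [|a + b|^2] *)
  rewrite !Cabs_sq, <- Cabs_mul. pose proof (Cabs_ge_fst (Cmul a (fst b, - snd b))).
  pose proof (Rle_abs (fst (Cmul a (fst b, - snd b)))).
  destruct a as [a1 a2], b as [b1 b2]. unfold Cadd, Cmul in *. simpl in *. nra.
Qed.

Lemma Cabs_opp a : Cabs (- fst a, - snd a) = Cabs a.
Proof. unfold Cabs; simpl. f_equal; ring. Qed.

Lemma Cabs_sub_triang a b : Cabs (Csub a b) <= Cabs a + Cabs b.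
Proof.
  replace (Csub a b) with (Cadd a (- fst b, - snd b)) by (apply Cpx_eq; unfold Csub, Cadd; simpl; ring).
  rewrite <- (Cabs_opp b). apply Cabs_triang.
Qed.

Lemma Csum_fst k f : fst (Csum k f) = sumR k (fun j => fst (f j)).
Proof. induction k as [|k IH]; simpl; [reflexivity|]. rewrite IH. reflexivity. Qed.

Lemma Csum_snd k f : snd (Csum k f) = sumR k (fun j => snd (f j)).
Proof. induction k as [|k IH]; simpl; [reflexivity|]. rewrite IH. reflexivity. Qed.

Lemma Csum_add k f h : Cadd (Csum k f) (Csum k h) = Csum k (fun j => Cadd (f j) (h j)).
Proof.
  induction k as [|k IH]; simpl; [apply Cpx_eq; simpl; ring|].
  rewrite <- IH. apply Cpx_eq; unfold Cadd; simpl; ring.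
Qed.

Lemma Csum_sub k f h : Csub (Csum k f) (Csum k h) = Csum k (fun j => Csub (f j) (h j)).
Proof.
  induction k as [|k IH]; simpl; [apply Cpx_eq; simpl; ring|].
  rewrite <- IH. apply Cpx_eq; unfold Csub, Cadd; simpl; ring.
Qed.

Lemma Cabs_Csum k f : Cabs (Csum k f) <= sumR k (fun j => Cabs (f j)).
Proof.
  induction k as [|k IH]; simpl.
  - unfold Cabs; simpl. replace (0 * 0 + 0 * 0) with 0 by ring. rewrite sqrt_0. lra.
  - eapply Rle_trans; [apply Cabs_triang|lra].
Qed.

Lemma Cabs_Csum_sub k f h :
  Cabs (Csub (Csum k f) (Csum k h)) <= sumR k (fun j => Cabs (Csub (f j) (h j))).
Proof. rewrite Csum_sub. apply Cabs_Csum. Qed.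

Lemma Cabs_zc_le n v j : (j < n)%nat -> Cabs (zc v j) <= 2 * vnorm (2 * n) v.
Proof.
  intros Hj. eapply Rle_trans; [apply Cabs_le_abs_sum|]. unfold zc. cbn [fst snd].
  pose proof (vnorm_ge_coord (2 * n) v (2 * j) ltac:(lia)).
  pose proof (vnorm_ge_coord (2 * n) v (2 * j + 1) ltac:(lia)). lra.
Qed.

(** * Differential calculus *)

Lemma has_grad_continuous m f x gr :
  has_grad m f x gr -> forall eps, 0 < eps -> exists del, 0 < del /\
    forall y, is_pt m y -> vnorm m (vsub y x) < del -> Rabs (f y - f x) < eps.
Proof.
  intros [_ Hg] eps Heps. destruct (Hg 1 ltac:(lra)) as [d [Hd Hy]].
  set (C := vnorm m gr + 1). assert (HC : 0 < C) by (pose proof (vnorm_nonneg m gr); unfold C; lra).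
  exists (Rmin d (eps / C)). split; [apply Rmin_pos; [lra|apply Rdiv_lt_0_compat; lra]|].
  intros y Hpy Hdy. pose proof (Rmin_l d (eps / C)). pose proof (Rmin_r d (eps / C)).
  specialize (Hy y Hpy ltac:(lra)). pose proof (cauchy_schwarz m gr (vsub y x)).
  assert (Hlip : Rabs (f y - f x) <= C * vnorm m (vsub y x)).
  { replace (f y - f x) with ((f y - f x - dot m gr (vsub y x)) + dot m gr (vsub y x)) by ring.
    eapply Rle_trans; [apply Rabs_triang|unfold C; lra]. }
  assert (C * vnorm m (vsub y x) < C * (eps / C)) by (apply Rmult_lt_compat_l; lra).
  replace (C * (eps / C)) with eps in * by (field; lra). lra.
Qed.

Lemma derivable_along_line m f w v gr th :
  is_pt m w -> is_pt m v -> has_grad m f (vadd w (vscal th v)) gr ->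
  derivable_pt_lim (fun s => f (vadd w (vscal s v))) th (dot m gr v).
Proof.
  intros Hw Hv [_ Hg] eps He.
  set (Nv := vnorm m v). assert (HN : 0 <= Nv) by apply vnorm_nonneg.
  destruct (Hg (eps / (2 * (Nv + 1))) ltac:(apply Rdiv_lt_0_compat; lra)) as [del [Hdel Hd]].
  assert (Hpos : 0 < del / (Nv + 1)) by (apply Rdiv_lt_0_compat; lra).
  exists (mkposreal _ Hpos). simpl. intros h Hh Hhd.
  set (p := vadd w (vscal th v)) in *.
  assert (Hq : vsub (vadd w (vscal (th + h) v)) p = vscal h v)
    by (apply functional_extensionality; intros i; unfold p, vsub, vadd, vscal; ring).
  assert (Hah : 0 < Rabs h) by (apply Rabs_pos_lt; auto).
  assert (Hsmall : Rabs h * Nv < del).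
  { apply Rle_lt_trans with (Rabs h * (Nv + 1)); [apply Rmult_le_compat_l; lra|].
    apply (Rmult_lt_reg_r (/ (Nv + 1))); [apply Rinv_0_lt_compat; lra|].
    rewrite Rmult_assoc, Rinv_r by lra. unfold Rdiv in Hhd. lra. }
  specialize (Hd (vadd w (vscal (th + h) v)) ltac:(apply is_pt_vadd; auto; apply is_pt_vscal; auto)).
  rewrite Hq, vnorm_scal, dot_scal_r in Hd. fold Nv in Hd. specialize (Hd Hsmall).
  replace ((f (vadd w (vscal (th + h) v)) - f p) / h - dot m gr v)
    with ((f (vadd w (vscal (th + h) v)) - f p - h * dot m gr v) / h) by (field; auto).
  unfold Rdiv. rewrite Rabs_mult, Rabs_inv.
  apply (Rmult_lt_reg_r (Rabs h)); auto. rewrite Rmult_assoc, Rinv_l, Rmult_1_r by lra.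
  eapply Rle_lt_trans; [apply Hd|].
  replace (eps / (2 * (Nv + 1)) * (Rabs h * Nv)) with ((eps * Rabs h) * (Nv / (2 * (Nv + 1))))
    by (field; lra).
  assert (Nv / (2 * (Nv + 1)) < 1).
  { apply (Rmult_lt_reg_r (2 * (Nv + 1))); [lra|]. field_simplify; lra. }
  assert (0 < eps * Rabs h) by (apply Rmult_lt_0_compat; lra). nra.
Qed.

Lemma mean_value_bound m f (gr : pt -> pt) w y C :
  is_pt m w -> is_pt m y ->
  (forall th, 0 <= th <= 1 ->
     has_grad m f (vadd w (vscal th (vsub y w))) (gr (vadd w (vscal th (vsub y w)))) /\
     sumR m (fun i => Rabs (gr (vadd w (vscal th (vsub y w))) i)) <= C) ->
  Rabs (f y - f w) <= C * vnorm m (vsub y w).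
Proof.
  intros Hw Hy H. set (v := vsub y w).
  assert (Hv : is_pt m v) by (apply is_pt_vsub; auto).
  destruct (MVT_cor2 (fun s => f (vadd w (vscal s v)))
              (fun s => dot m (gr (vadd w (vscal s v))) v) 0 1 ltac:(lra)) as [c [Hc Hc01]].
  { intros c Hc. apply derivable_along_line; auto. apply H; auto. }
  assert (E1 : vadd w (vscal 1 v) = y)
    by (apply functional_extensionality; intros; unfold v, vadd, vscal, vsub; ring).
  assert (E0 : vadd w (vscal 0 v) = w)
    by (apply functional_extensionality; intros; unfold v, vadd, vscal, vsub; ring).
  rewrite E1, E0 in Hc. rewrite Hc, Rminus_0_r, Rmult_1_r.
  eapply Rle_trans; [apply dot_abs_le|].
  apply Rmult_le_compat_r; [apply vnorm_nonneg|apply H; lra].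
Qed.

(** * Sequential compactness *)

Definition strict_incr (phi : nat -> nat) : Prop := forall k, (phi k < phi (S k))%nat.

Lemma strict_incr_ge phi : strict_incr phi -> forall k, (k <= phi k)%nat.
Proof. intros H k. induction k as [|k IH]; [lia|]. specialize (H k). lia. Qed.

Lemma strict_incr_le phi : strict_incr phi -> forall a b, (a <= b)%nat -> (phi a <= phi b)%nat.
Proof. intros H a b Hab. induction Hab as [|b Hab IH]; [lia|]. specialize (H b). lia. Qed.

Lemma strict_incr_comp phi psi :
  strict_incr phi -> strict_incr psi -> strict_incr (fun k => phi (psi k)).
Proof.
  intros H1 H2 k. pose proof (strict_incr_le phi H1 (S (psi k)) (psi (S k)) (H2 k)).
  specialize (H1 (psi k)). lia.
Qed.

Lemma INR_eventually_ge C : exists N, forall k, (N <= k)%nat -> C <= INR k.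
Proof.
  destruct (archimed C) as [H _]. destruct (Rle_or_lt C 0).
  - exists O. intros k _. pose proof (pos_INR k). lra.
  - exists (Z.to_nat (up C)). intros k Hk. apply le_INR in Hk.
    rewrite INR_IZR_INZ, Z2Nat.id in Hk by (apply le_IZR; lra). lra.
Qed.

Lemma inv_INR_eventually_lt eps : 0 < eps -> exists N, forall k, (N <= k)%nat -> / (INR k + 1) < eps.
Proof.
  intros He. destruct (INR_eventually_ge (/ eps)) as [N HN]. exists N. intros k Hk.
  specialize (HN k Hk). pose proof (pos_INR k).
  apply (Rmult_lt_reg_l (INR k + 1)); [lra|]. rewrite Rinv_r by lra.
  apply (Rmult_lt_reg_l (/ eps)); [apply Rinv_0_lt_compat; lra|].
  replace (/ eps * ((INR k + 1) * eps)) with (INR k + 1) by (field; lra). lra.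
Qed.

Lemma bounded_seq_cv_subseq (u : nat -> R) M : (forall k, Rabs (u k) <= M) ->
  exists phi l, strict_incr phi /\
    forall eps, 0 < eps -> exists N, forall k, (N <= k)%nat -> Rabs (u (phi k) - l) < eps.
Proof.
  intros HM.
  destruct (Bolzano_Weierstrass u (fun c => - M <= c <= M) (compact_P3 (- M) M)) as [l Hl].
  { intros k. apply Rabs_le_between, HM. }
  assert (Hsel : forall N k : nat, exists p, (N <= p)%nat /\ Rabs (u p - l) < / (INR k + 1)).
  { intros N k.
    assert (Hpos : 0 < / (INR k + 1)) by (apply Rinv_0_lt_compat; pose proof (pos_INR k); lra).
    destruct (Hl (fun y => Rabs (y - l) < / (INR k + 1)) N) as [p [Hp Hv]]; [|exists p; auto].
    exists (mkposreal _ Hpos). intros y Hy. exact Hy. }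
  destruct (choice (fun (Nk : nat * nat) p =>
                      (fst Nk <= p)%nat /\ Rabs (u p - l) < / (INR (snd Nk) + 1)))
    as [sel Hsel']; [intros [N k]; apply (Hsel N k)|].
  set (phi := fix phi (k : nat) : nat :=
         match k with O => sel (O, O) | S k' => sel (S (phi k'), S k') end).
  assert (Hphi : forall k, Rabs (u (phi k) - l) < / (INR k + 1))
    by (intros [|k]; apply (Hsel' (_, _))).
  exists phi, l. split.
  - intros k. apply (Hsel' (S (phi k), S k)).
  - intros eps He. destruct (inv_INR_eventually_lt eps He) as [N HN]. exists N. intros k Hk.
    specialize (HN k Hk). specialize (Hphi k). lra.
Qed.

Lemma bounded_seq_Rm_cv_subseq (u : nat -> pt) M : (forall k i, Rabs (u k i) <= M) -> forall m,
  exists phi L, strict_incr phi /\ forall eps, 0 < eps -> exists N, forall k, (N <= k)%nat ->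
    sumR m (fun i => Rabs (u (phi k) i - L i)) < eps.
Proof.
  intros HM m. induction m as [|m [phi [L [Hphi HL]]]].
  - exists (fun k => k), (fun _ => 0). split; [intros k; lia|].
    intros eps He; exists O; intros; simpl; lra.
  - destruct (bounded_seq_cv_subseq (fun k => u (phi k) m) M) as [psi [l [Hpsi Hl]]];
      [intros; apply HM|].
    exists (fun k => phi (psi k)), (fun i => if Nat.eqb i m then l else L i).
    split; [apply strict_incr_comp; auto|].
    intros eps He.
    destruct (HL (eps / 2) ltac:(lra)) as [N1 H1]. destruct (Hl (eps / 2) ltac:(lra)) as [N2 H2].
    exists (Nat.max N1 N2). intros k Hk. simpl sumR. rewrite Nat.eqb_refl.
    rewrite (sumR_ext m _ (fun i => Rabs (u (phi (psi k)) i - L i))).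
    2:{ intros i Hi. destruct (Nat.eqb_spec i m); [lia|reflexivity]. }
    pose proof (strict_incr_ge psi Hpsi k).
    specialize (H1 (psi k) ltac:(lia)). specialize (H2 k ltac:(lia)). lra.
Qed.

Definition seq_compact (m : nat) (K : pt -> Prop) : Prop :=
  forall u : nat -> pt, (forall k, K (u k)) ->
  exists phi x, strict_incr phi /\ K x /\
    forall eps, 0 < eps -> exists N, forall k, (N <= k)%nat -> vnorm m (vsub (u (phi k)) x) < eps.

Lemma cont_on_subset m S S' f : (forall x, S x -> S' x) -> cont_on m S' f -> cont_on m S f.
Proof.
  intros HS Hc x Hx eps He. destruct (Hc x (HS x Hx) eps He) as [d [Hd H]].
  exists d. split; auto.
Qed.

Section SeqCompact.
Variables (m : nat) (K : pt -> Prop).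
Hypothesis HK : seq_compact m K.

Lemma seq_compact_bounded f : cont_on m K f -> exists C, forall x, K x -> Rabs (f x) <= C.
Proof.
  intros Hc. apply NNPP. intros Hno.
  assert (Hbad : forall k : nat, exists x, K x /\ INR k < Rabs (f x)).
  { intros k. apply NNPP. intros Hk. apply Hno. exists (INR k). intros x Hx.
    apply Rnot_lt_le. intros Hlt. apply Hk. exists x. auto. }
  destruct (choice _ Hbad) as [u Hu].
  destruct (HK u (fun k => proj1 (Hu k))) as [phi [x [Hphi [Hx Hcv]]]].
  destruct (Hc x Hx 1 ltac:(lra)) as [d [Hd Hnear]].
  destruct (Hcv d Hd) as [N1 H1]. destruct (INR_eventually_ge (Rabs (f x) + 1)) as [N2 H2].
  set (k := Nat.max N1 N2). pose proof (strict_incr_ge phi Hphi k).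
  specialize (Hnear (u (phi k)) (proj1 (Hu (phi k))) (H1 k ltac:(lia))).
  pose proof (proj2 (Hu (phi k))). specialize (H2 (phi k) ltac:(lia)).
  pose proof (Rabs_triang_inv (f (u (phi k))) (f x)). lra.
Qed.

Lemma seq_compact_pos_lower_bound f :
  cont_on m K f -> (forall x, K x -> 0 < f x) -> exists c, 0 < c /\ forall x, K x -> c <= f x.
Proof.
  intros Hc Hpos. apply NNPP. intros Hno.
  assert (Hbad : forall k : nat, exists x, K x /\ f x < / (INR k + 1)).
  { intros k. apply NNPP. intros Hk. apply Hno. exists (/ (INR k + 1)).
    split; [apply Rinv_0_lt_compat; pose proof (pos_INR k); lra|].
    intros x Hx. apply Rnot_lt_le. intros Hlt. apply Hk. exists x. auto. }
  destruct (choice _ Hbad) as [u Hu].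
  destruct (HK u (fun k => proj1 (Hu k))) as [phi [x [Hphi [Hx Hcv]]]].
  pose proof (Hpos x Hx) as Hfx.
  destruct (Hc x Hx (f x / 2) ltac:(lra)) as [d [Hd Hnear]].
  destruct (Hcv d Hd) as [N1 H1]. destruct (inv_INR_eventually_lt (f x / 2) ltac:(lra)) as [N2 H2].
  set (k := Nat.max N1 N2). pose proof (strict_incr_ge phi Hphi k).
  specialize (Hnear (u (phi k)) (proj1 (Hu (phi k))) (H1 k ltac:(lia))).
  pose proof (proj2 (Hu (phi k))). specialize (H2 (phi k) ltac:(lia)).
  apply Rabs_def2 in Hnear. lra.
Qed.

Variable G : pt -> Prop.
Hypothesis HKG : forall x, K x -> G x.
Hypothesis HG : open_in m G.

Lemma seq_compact_unif_cont2 (f : pt -> pt -> R) : cont2_on m G f ->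
  forall eta, 0 < eta -> exists lam, 0 < lam /\
    forall w z y, K w -> K z -> is_pt m y -> vnorm m (vsub y w) < lam ->
      G y /\ Rabs (f y z - f w z) < eta.
Proof.
  intros Hc eta He. apply NNPP. intros Hno.
  assert (Hbad : forall k : nat, exists p : pt * pt * pt,
    K (fst (fst p)) /\ K (snd (fst p)) /\ is_pt m (snd p) /\
    vnorm m (vsub (snd p) (fst (fst p))) < / (INR k + 1) /\
    ~ (G (snd p) /\ Rabs (f (snd p) (snd (fst p)) - f (fst (fst p)) (snd (fst p))) < eta)).
  { intros k. apply NNPP. intros Hk. apply Hno. exists (/ (INR k + 1)).
    split; [apply Rinv_0_lt_compat; pose proof (pos_INR k); lra|].
    intros w z y Hw Hz Hy Hd. apply NNPP. intros HP. apply Hk. exists (w, z, y). simpl; tauto. }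
  destruct (choice _ Hbad) as [u Hu].
  destruct (HK (fun k => fst (fst (u k)))) as [phi [w0 [Hphi [Hw0 Hcw]]]]; [intros k; apply Hu|].
  destruct (HK (fun k => snd (fst (u (phi k))))) as [psi [z0 [Hpsi [Hz0 Hcz]]]]; [intros k; apply Hu|].
  destruct (proj2 HG w0 (HKG w0 Hw0)) as [r [Hr Hball]].
  destruct (Hc w0 z0 (HKG w0 Hw0) (HKG z0 Hz0) (eta / 2) ltac:(lra)) as [d [Hd Hnear]].
  set (e := Rmin r d). assert (He0 : 0 < e) by (apply Rmin_pos; lra).
  assert (e <= r) by apply Rmin_l. assert (e <= d) by apply Rmin_r.
  destruct (Hcw (e / 2) ltac:(lra)) as [N1 H1]. destruct (Hcz d Hd) as [N2 H2].
  destruct (inv_INR_eventually_lt (e / 2) ltac:(lra)) as [N3 H3].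
  set (k := Nat.max N1 (Nat.max N2 N3)). set (j := phi (psi k)).
  pose proof (strict_incr_ge psi Hpsi k). pose proof (strict_incr_ge phi Hphi (psi k)).
  destruct (Hu j) as [Kw [Kz [Py [Dy NP]]]]. apply NP.
  set (w := fst (fst (u j))) in *. set (z := snd (fst (u j))) in *. set (y := snd (u j)) in *.
  assert (Hw : vnorm m (vsub w w0) < e / 2) by (apply H1; lia).
  assert (Hz : vnorm m (vsub z z0) < d) by (apply H2; lia).
  assert (Hk : / (INR j + 1) < e / 2) by (apply H3; lia).
  assert (Hy : vnorm m (vsub y w0) < e) by (pose proof (vnorm_sub_triang m y w w0); lra).
  assert (HGy : G y) by (apply Hball; auto; lra).
  split; [exact HGy|]. apply (Rabs_sub_lt_half _ _ (f w0 z0)).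
  - apply Hnear; auto; lra.
  - apply Hnear; auto; lra.
Qed.

Lemma seq_compact_unif_cont f : cont_on m G f ->
  forall eta, 0 < eta -> exists lam, 0 < lam /\
    forall w y, K w -> is_pt m y -> vnorm m (vsub y w) < lam -> G y /\ Rabs (f y - f w) < eta.
Proof.
  intros Hc eta He.
  destruct (seq_compact_unif_cont2 (fun w _ => f w)) with eta as [lam [Hl H]]; auto.
  - intros w z Hw _ eps Heps. destruct (Hc w Hw eps Heps) as [d [Hd Hd']].
    exists d. split; auto.
  - exists lam. split; auto. intros w y Hw Hy Hd. apply (H w w y); auto.
Qed.

Lemma unif_cont_family {I : Type} (l : list I) (f : I -> pt -> R) :
  (forall i, In i l -> cont_on m G (f i)) ->
  forall eta, 0 < eta -> exists lam, 0 < lam /\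
    forall w y, K w -> is_pt m y -> vnorm m (vsub y w) < lam ->
      G y /\ forall i, In i l -> Rabs (f i y - f i w) < eta.
Proof.
  intros Hc eta He. induction l as [|i0 l IH].
  - destruct (seq_compact_unif_cont (fun _ => 0)) with eta as [lam [Hl H]]; auto.
    + intros x _ eps Heps. exists 1. split; [lra|]. intros. rewrite Rminus_0_r, Rabs_R0. auto.
    + exists lam. split; auto. intros w y Hw Hy Hd. split; [apply (H w y); auto|intros i []].
  - destruct IH as [lam1 [Hl1 H1]]; [intros; apply Hc; simpl; auto|].
    destruct (seq_compact_unif_cont (f i0)) with eta as [lam2 [Hl2 H2]]; auto; [apply Hc; simpl; auto|].
    exists (Rmin lam1 lam2). split; [apply Rmin_pos; auto|].
    intros w y Hw Hy Hd. pose proof (Rmin_l lam1 lam2). pose proof (Rmin_r lam1 lam2).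
    destruct (H1 w y Hw Hy ltac:(lra)) as [HGy Hf]. split; auto.
    intros i [<-|Hi]; [apply H2; auto; lra|auto].
Qed.

Lemma bounded_family {I : Type} (l : list I) (f : I -> pt -> R) :
  (forall i, In i l -> cont_on m G (f i)) ->
  exists C, forall x, K x -> forall i, In i l -> Rabs (f i x) <= C.
Proof.
  intros Hc. induction l as [|i0 l IH].
  - exists 0. intros x _ i [].
  - destruct IH as [C1 H1]; [intros; apply Hc; simpl; auto|].
    destruct (seq_compact_bounded (f i0)) as [C2 H2].
    { apply (cont_on_subset _ _ G); auto. apply Hc; simpl; auto. }
    exists (Rmax C1 C2). intros x Hx i [<-|Hi].
    + eapply Rle_trans; [apply H2; auto|apply Rmax_r].
    + eapply Rle_trans; [apply H1; auto|apply Rmax_l].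
Qed.

End SeqCompact.

(** * The boundary of a strongly pseudoconvex domain *)

Section Boundary.
Variables (n : nat) (U : pt -> Prop) (rho : pt -> R) (grad : pt -> pt) (hess : pt -> nat -> pt).
Hypothesis HS : SPC_setup n U rho grad hess.

Lemma bD_U x : bD n U rho x -> U x.
Proof. intros [Hx _]. apply HS, Hx. Qed.

Lemma U_is_pt x : U x -> is_pt (2 * n) x.
Proof. apply HS. Qed.

Lemma bD_is_pt x : bD n U rho x -> is_pt (2 * n) x.
Proof. intros Hx. apply U_is_pt, bD_U, Hx. Qed.

Lemma rho_continuous x : U x -> forall eps, 0 < eps -> exists del, 0 < del /\
  forall y, is_pt (2 * n) y -> vnorm (2 * n) (vsub y x) < del -> Rabs (rho y - rho x) < eps.
Proof. intros Hx. apply (has_grad_continuous _ _ _ (grad x)), HS, Hx. Qed.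

Lemma bD_rho_nonpos z : bD n U rho z -> rho z <= 0.
Proof.
  intros Hz. destruct (Rle_or_lt (rho z) 0) as [|Hpos]; [auto|exfalso].
  pose proof Hz as [[_ Hcl] _].
  destruct (rho_continuous z (bD_U z Hz) (rho z) Hpos) as [d [Hd Hc]].
  destruct (Hcl d Hd) as [y [[HUy Hry] Hyd]].
  specialize (Hc y (U_is_pt y HUy) Hyd). apply Rabs_def2 in Hc. lra.
Qed.

Lemma bD_seq_compact : seq_compact (2 * n) (bD n U rho).
Proof.
  destruct HS as [[HUp HUo] [_ [_ [_ [_ [[M HM] _]]]]]].
  intros u Hu.
  assert (Hb : forall k i, Rabs (u k i) <= M + 1).
  { intros k i. destruct (Hu k) as [[Hp Hc] _].
    destruct (Hc 1 ltac:(lra)) as [y [Hy Hd]]. pose proof (HM y Hy).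
    pose proof (vnorm_nonneg (2 * n) y).
    destruct (lt_dec i (2 * n)) as [Hi|Hi].
    - pose proof (vnorm_le_add_sub (2 * n) (u k) y). rewrite vnorm_sub_sym in Hd.
      pose proof (vnorm_ge_coord (2 * n) (u k) i Hi). lra.
    - rewrite Hp, Rabs_R0 by lia. lra. }
  destruct (bounded_seq_Rm_cv_subseq u (M + 1) Hb (2 * n)) as [phi [L [Hphi HL]]].
  set (x := fun i => if Nat.ltb i (2 * n) then L i else 0).
  assert (Hcv : forall eps, 0 < eps -> exists N, forall k, (N <= k)%nat ->
                  vnorm (2 * n) (vsub (u (phi k)) x) < eps).
  { intros eps He. destruct (HL eps He) as [N HN]. exists N. intros k Hk.
    eapply Rle_lt_trans; [apply vnorm_le_sum_abs|]. erewrite sumR_ext; [apply (HN k Hk)|].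
    intros i Hi. unfold vsub, x. destruct (Nat.ltb_spec i (2 * n)); [reflexivity|lia]. }
  assert (Hxp : is_pt (2 * n) x).
  { intros i Hi. unfold x. destruct (Nat.ltb_spec i (2 * n)); [lia|reflexivity]. }
  exists phi, x. split; [exact Hphi|]. split; [split; [split; [exact Hxp|]|]|exact Hcv].
  - intros eps He. destruct (Hcv (eps / 2) ltac:(lra)) as [N HN]. specialize (HN N (le_n _)).
    destruct (Hu (phi N)) as [[_ Hc] _]. destruct (Hc (eps / 2) ltac:(lra)) as [y [Hy Hd]].
    exists y. split; [exact Hy|]. pose proof (vnorm_sub_triang (2 * n) y (u (phi N)) x). lra.
  - (* a limit of points outside [D] cannot lie in the open set [D] *)
    intros [HUx Hrx]. destruct (HUo x HUx) as [r [Hr Hball]].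
    destruct (rho_continuous x HUx (- rho x) ltac:(lra)) as [d [Hd Hc]].
    destruct (Hcv (Rmin r d) (Rmin_pos _ _ Hr Hd)) as [N HN]. specialize (HN N (le_n _)).
    pose proof (Rmin_l r d). pose proof (Rmin_r r d).
    destruct (Hu (phi N)) as [[Hp _] Hnd]. apply Hnd. split.
    + apply Hball; auto; lra.
    + specialize (Hc (u (phi N)) Hp ltac:(lra)). apply Rabs_def2 in Hc. lra.
Qed.

Lemma grad_lipschitz_near_bD : exists lam L, 0 < lam /\ 0 <= L /\
  forall w y, bD n U rho w -> is_pt (2 * n) y -> vnorm (2 * n) (vsub y w) < lam ->
    U y /\ forall i, (i < 2 * n)%nat -> Rabs (grad y i - grad w i) <= L * vnorm (2 * n) (vsub y w).
Proof.
  destruct HS as [HUo [[_ [Hhg Hhc]] _]].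
  set (ix := list_prod (seq 0 (2 * n)) (seq 0 (2 * n))).
  assert (Hix : forall i j, In (i, j) ix <-> (i < 2 * n)%nat /\ (j < 2 * n)%nat).
  { intros i j. unfold ix. rewrite in_prod_iff, !in_seq. lia. }
  set (h := fun (ij : nat * nat) y => hess y (fst ij) (snd ij)).
  assert (Hhc' : forall ij, In ij ix -> cont_on (2 * n) U (h ij)).
  { intros [i j] Hij. apply Hix in Hij. apply Hhc; apply Hij. }
  destruct (unif_cont_family _ _ bD_seq_compact U bD_U HUo ix h Hhc' 1 ltac:(lra)) as [lam [Hlam Hnear]].
  destruct (bounded_family _ _ bD_seq_compact U bD_U ix h Hhc') as [CH HCH].
  exists lam, (INR (2 * n) * (Rabs CH + 1)).
  split; [exact Hlam|]. split; [apply Rmult_le_pos; [apply pos_INR|pose proof (Rabs_pos CH); lra]|].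
  intros w y Hw Hy Hd. split; [apply (Hnear w y); auto|]. intros i Hi.
  apply (mean_value_bound _ (fun x => grad x i) (fun p => hess p i)); [apply bD_is_pt; auto|auto|].
  intros th Hth. set (p := vadd w (vscal th (vsub y w))).
  assert (Hpw : vsub p w = vscal th (vsub y w))
    by (apply functional_extensionality; intros; unfold p, vsub, vadd, vscal; ring).
  assert (Hpp : is_pt (2 * n) p)
    by (apply is_pt_vadd; [|apply is_pt_vscal, is_pt_vsub]; auto; apply bD_is_pt; auto).
  assert (Hpd : vnorm (2 * n) (vsub p w) < lam).
  { rewrite Hpw, vnorm_scal, Rabs_right by lra. pose proof (vnorm_nonneg (2 * n) (vsub y w)). nra. }
  destruct (Hnear w p Hw Hpp Hpd) as [HUp Hb]. split; [apply Hhg; auto|].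
  apply sumR_le_const. intros j Hj.
  specialize (Hb (i, j) (proj2 (Hix i j) (conj Hi Hj))).
  specialize (HCH w Hw (i, j) (proj2 (Hix i j) (conj Hi Hj))).
  unfold h in Hb, HCH. simpl in Hb, HCH.
  pose proof (Rle_abs CH). pose proof (Rabs_triang_inv (hess p i j) (hess w i j)). lra.
Qed.

Lemma grad_norm_cont_on_bD : cont_on (2 * n) (bD n U rho) (fun x => vnorm (2 * n) (grad x)).
Proof.
  destruct grad_lipschitz_near_bD as [lam [L [Hlam [HL Hlip]]]].
  intros x Hx eps He. set (C := INR (2 * n) * L + 1).
  assert (HC : 0 < C) by (unfold C; pose proof (pos_INR (2 * n)); nra).
  exists (Rmin lam (eps / C)). split; [apply Rmin_pos; [lra|apply Rdiv_lt_0_compat; lra]|].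
  intros y Hy Hd. pose proof (Rmin_l lam (eps / C)). pose proof (Rmin_r lam (eps / C)).
  destruct (Hlip x y Hx (bD_is_pt y Hy) ltac:(lra)) as [_ Hg].
  eapply Rle_lt_trans; [apply vnorm_diff_le|]. eapply Rle_lt_trans; [apply vnorm_le_sum_abs|].
  eapply Rle_lt_trans; [apply (sumR_le_const _ _ (L * vnorm (2 * n) (vsub y x))), Hg|].
  pose proof (vnorm_nonneg (2 * n) (vsub y x)).
  apply Rle_lt_trans with (C * vnorm (2 * n) (vsub y x)); [unfold C; nra|].
  apply Rlt_le_trans with (C * (eps / C)); [apply Rmult_lt_compat_l; lra|].
  right. field. lra.
Qed.

Lemma grad_bounded_on_bD : exists Gam, 0 <= Gam /\
  forall w, bD n U rho w -> vnorm (2 * n) (grad w) <= Gam.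
Proof.
  destruct (seq_compact_bounded _ _ bD_seq_compact _ grad_norm_cont_on_bD) as [C HC].
  exists (Rabs C). split; [apply Rabs_pos|]. intros w Hw.
  specialize (HC w Hw). rewrite Rabs_right in HC by (apply Rle_ge, vnorm_nonneg).
  pose proof (Rle_abs C). lra.
Qed.

Lemma grad_bounded_below_on_bD : exists c, 0 < c /\
  forall w, bD n U rho w -> c <= vnorm (2 * n) (grad w).
Proof.
  apply (seq_compact_pos_lower_bound _ _ bD_seq_compact _ grad_norm_cont_on_bD). apply HS.
Qed.

End Boundary.

(** * Algebraic estimates for the denominator *)

Lemma Cabs_add_pos_real_perturb (zeta e : Cpx) s :
  0 <= fst zeta -> 0 <= s -> Cabs e <= (Cabs zeta + s) / 20 ->
  (Cabs zeta + s) / 4 <= Cabs (Cadd (Cadd zeta (s / 2, 0)) e) /\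
  Cabs (Cadd (Cadd zeta (s / 2, 0)) e) <= 2 * (Cabs zeta + s).
Proof.
  intros Hre Hs He. set (x := Cadd zeta (s / 2, 0)).
  pose proof (Cabs_nonneg zeta). pose proof (Cabs_nonneg x).
  (* [Re zeta >= 0], so adding the positive real [s/2] cannot cause cancellation *)
  assert (Hx1 : (Cabs zeta + s) / 3 <= Cabs x).
  { apply Rsqr_incr_0_var; [|lra]. unfold Rsqr. rewrite Cabs_sq.
    pose proof (Cabs_sq zeta). pose proof (Rle_0_sqr (Cabs zeta - s)). unfold Rsqr in *.
    unfold x, Cadd. simpl. nra. }
  assert (Hx2 : Cabs x <= Cabs zeta + s / 2).
  { eapply Rle_trans; [apply Cabs_triang|]. unfold Cabs at 2. simpl.
    replace (s / 2 * (s / 2) + 0 * 0) with ((s / 2) * (s / 2)) by ring. rewrite sqrt_square; lra. }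
  split.
  - pose proof (Cabs_sub_triang (Cadd x e) e) as Hx.
    replace (Csub (Cadd x e) e) with x in Hx by (apply Cpx_eq; unfold Csub, Cadd; simpl; ring). lra.
  - pose proof (Cabs_triang x e). lra.
Qed.

Lemma Cabs_small_perturb (zeta e : Cpx) s :
  Cabs e <= Cabs zeta / 2 -> 0 <= s <= Cabs zeta ->
  (Cabs zeta + s) / 4 <= Cabs (Cadd zeta e) /\ Cabs (Cadd zeta e) <= 2 * (Cabs zeta + s).
Proof.
  intros He Hs. pose proof (Cabs_triang zeta e). pose proof (Cabs_sub_triang (Cadd zeta e) e) as Hz.
  replace (Csub (Cadd zeta e) e) with zeta in Hz by (apply Cpx_eq; unfold Csub, Cadd; simpl; ring).
  lra.
Qed.

(* [<d rho(w), t N_w> = - t / 2]: this is the main term of the increment *)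
Lemma pair_drho_normal_step n grad w t : 0 < dot (2 * n) (grad w) (grad w) ->
  Csum n (fun j => Cmul (drho_j grad w j) (zc (vscal t (Nfield (2 * n) grad w)) j)) = (- t / 2, 0).
Proof.
  intros HD. set (D := dot (2 * n) (grad w) (grad w)) in *. apply Cpx_eq.
  - rewrite Csum_fst. unfold drho_j, zc, Cmul, Nfield, vscal. cbn [fst snd]. fold D.
    rewrite (sumR_ext n _ (fun j => (- t / (2 * D)) *
      (grad w (2 * j)%nat * grad w (2 * j)%nat + grad w (2 * j + 1)%nat * grad w (2 * j + 1)%nat)))
      by (intros; field; lra).
    rewrite sumR_scal, <- (sumR_double n (fun i => grad w i * grad w i)).
    fold (dot (2 * n) (grad w) (grad w)). fold D. field. lra.
  - rewrite Csum_snd. unfold drho_j, zc, Cmul, Nfield, vscal. cbn [fst snd].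
    rewrite (sumR_ext n _ (fun _ => 0)) by (intros; ring). rewrite sumR_const. simpl. ring.
Qed.

Lemma Cmul_linear_increment_le (D' D Z V T : Cpx) :
  Cabs (Csub (Cmul D' (Cadd Z V)) (Cadd (Cmul D Z) (Cmul D T))) <=
  Cabs (Csub D' D) * (Cabs Z + Cabs V) + Cabs D * Cabs (Csub V T).
Proof.
  replace (Csub (Cmul D' (Cadd Z V)) (Cadd (Cmul D Z) (Cmul D T)))
    with (Cadd (Cmul (Csub D' D) (Cadd Z V)) (Cmul D (Csub V T)))
    by (apply Cpx_eq; unfold Csub, Cadd, Cmul; cbn [fst snd]; ring).
  eapply Rle_trans; [apply Cabs_triang|]. rewrite !Cabs_mul.
  pose proof (Cabs_triang Z V). pose proof (Cabs_nonneg (Csub D' D)).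
  apply Rplus_le_compat_r, Rmult_le_compat_l; auto.
Qed.

Lemma Cmul_quadratic_increment_le (A' A Zj Zk Vj Vk : Cpx) :
  Cabs (Csub (Cmul A' (Cmul (Cadd Zj Vj) (Cadd Zk Vk))) (Cmul A (Cmul Zj Zk))) <=
  Cabs (Csub A' A) * Cabs Zj * Cabs Zk +
  Cabs A' * (Cabs Vj * (Cabs Zk + Cabs Vk) + Cabs Zj * Cabs Vk).
Proof.
  replace (Csub (Cmul A' (Cmul (Cadd Zj Vj) (Cadd Zk Vk))) (Cmul A (Cmul Zj Zk)))
    with (Cadd (Cmul (Csub A' A) (Cmul Zj Zk))
               (Cadd (Cmul A' (Cmul Vj (Cadd Zk Vk))) (Cmul A' (Cmul Zj Vk))))
    by (apply Cpx_eq; unfold Csub, Cadd, Cmul; cbn [fst snd]; ring).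
  eapply Rle_trans; [apply Cabs_triang|].
  eapply Rle_trans; [apply Rplus_le_compat_l, Cabs_triang|]. rewrite !Cabs_mul.
  pose proof (Cabs_triang Zk Vk). pose proof (Cabs_nonneg A'). pose proof (Cabs_nonneg Vj).
  pose proof (Cabs_nonneg Zj). pose proof (Cabs_nonneg Vk).
  assert (Cabs Vj * Cabs (Cadd Zk Vk) <= Cabs Vj * (Cabs Zk + Cabs Vk))
    by (apply Rmult_le_compat_l; auto).
  nra.
Qed.

Lemma Cabs_drho_j_le gr w j :
  Cabs (drho_j gr w j) <= (Rabs (gr w (2 * j)%nat) + Rabs (gr w (2 * j + 1)%nat)) / 2.
Proof.
  eapply Rle_trans; [apply Cabs_le_abs_sum|]. unfold drho_j. cbn [fst snd].
  rewrite Rabs_Ropp, !Rabs_mult, Rabs_right by lra. lra.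
Qed.

Lemma Cabs_drho_j_sub_le gr y w j :
  Cabs (Csub (drho_j gr y j) (drho_j gr w j)) <=
  (Rabs (gr y (2 * j)%nat - gr w (2 * j)%nat) + Rabs (gr y (2 * j + 1)%nat - gr w (2 * j + 1)%nat)) / 2.
Proof.
  set (p := gr y (2 * j)%nat - gr w (2 * j)%nat). set (q := gr y (2 * j + 1)%nat - gr w (2 * j + 1)%nat).
  replace (Csub (drho_j gr y j) (drho_j gr w j)) with (/ 2 * p, - (/ 2 * q))
    by (apply Cpx_eq; unfold drho_j, Csub, p, q; cbn [fst snd]; ring).
  eapply Rle_trans; [apply Cabs_le_abs_sum|]. cbn [fst snd].
  rewrite Rabs_Ropp, !Rabs_mult, Rabs_right by lra. lra.
Qed.

Lemma zc_vsub_chain y w z j : zc (vsub y z) j = Cadd (zc (vsub w z) j) (zc (vsub y w) j).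
Proof. apply Cpx_eq; unfold zc, vsub, Cadd; cbn [fst snd]; ring. Qed.

Lemma zc_vsub_vadd y w tau j : Csub (zc (vsub y w) j) (zc tau j) = zc (vsub y (vadd w tau)) j.
Proof. apply Cpx_eq; unfold zc, vsub, vadd, Csub; cbn [fst snd]; ring. Qed.

Section IncrementBounds.
Variables (n : nat) (y w z : pt).

Lemma pair_drho_increment_le grad tau L Gam :
  (forall i, (i < 2 * n)%nat -> Rabs (grad y i - grad w i) <= L * vnorm (2 * n) (vsub y w)) ->
  vnorm (2 * n) (grad w) <= Gam ->
  Cabs (Csub (pair_drho n grad y z)
             (Cadd (pair_drho n grad w z) (Csum n (fun j => Cmul (drho_j grad w j) (zc tau j))))) <=
  INR n * (2 * L * vnorm (2 * n) (vsub y w) * vnorm (2 * n) (vsub w z)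
           + 2 * L * vnorm (2 * n) (vsub y w) * vnorm (2 * n) (vsub y w)
           + 2 * Gam * vnorm (2 * n) (vsub y (vadd w tau))).
Proof.
  intros Hlip HG.
  unfold pair_drho. rewrite Csum_add. eapply Rle_trans; [apply Cabs_Csum_sub|].
  apply sumR_le_const. intros j Hj. rewrite (zc_vsub_chain y w z j).
  eapply Rle_trans; [apply (Cmul_linear_increment_le _ _ _ _ (zc tau j))|]. rewrite zc_vsub_vadd.
  pose proof (Cabs_drho_j_sub_le grad y w j).
  pose proof (Hlip (2 * j)%nat ltac:(lia)). pose proof (Hlip (2 * j + 1)%nat ltac:(lia)).
  pose proof (Cabs_drho_j_le grad w j).
  pose proof (vnorm_ge_coord (2 * n) (grad w) (2 * j) ltac:(lia)).
  pose proof (vnorm_ge_coord (2 * n) (grad w) (2 * j + 1) ltac:(lia)).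
  pose proof (Cabs_zc_le n (vsub w z) j Hj). pose proof (Cabs_zc_le n (vsub y w) j Hj).
  pose proof (Cabs_zc_le n (vsub y (vadd w tau)) j Hj).
  pose proof (Cabs_nonneg (Csub (drho_j grad y j) (drho_j grad w j))).
  pose proof (Cabs_nonneg (drho_j grad w j)).
  pose proof (Cabs_nonneg (zc (vsub w z) j)). pose proof (Cabs_nonneg (zc (vsub y w) j)).
  pose proof (Cabs_nonneg (zc (vsub y (vadd w tau)) j)).
  set (V := vnorm (2 * n) (vsub y w)) in *. set (Z := vnorm (2 * n) (vsub w z)) in *.
  assert (Cabs (Csub (drho_j grad y j) (drho_j grad w j))
          * (Cabs (zc (vsub w z) j) + Cabs (zc (vsub y w) j))
          <= (L * V) * (2 * Z + 2 * V)) by (apply Rmult_le_compat; lra).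
  assert (Cabs (drho_j grad w j) * Cabs (zc (vsub y (vadd w tau)) j)
          <= Gam * (2 * vnorm (2 * n) (vsub y (vadd w tau))))
    by (apply Rmult_le_compat; lra).
  lra.
Qed.

Lemma Qform_increment_le (a : pt -> nat -> nat -> Cpx) Aa eta :
  (forall j k, (j < n)%nat -> (k < n)%nat ->
     Cabs (a y j k) <= Aa /\ Cabs (Csub (a y j k) (a w j k)) <= 2 * eta) ->
  Cabs (Csub (Qform n a y (vsub y z)) (Qform n a w (vsub w z))) <=
  INR n * INR n * (8 * eta * (vnorm (2 * n) (vsub w z) * vnorm (2 * n) (vsub w z))
                   + 8 * Aa * vnorm (2 * n) (vsub y w) * vnorm (2 * n) (vsub w z)
                   + 4 * Aa * vnorm (2 * n) (vsub y w) * vnorm (2 * n) (vsub y w)).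
Proof.
  intros Ha. unfold Qform. eapply Rle_trans; [apply Cabs_Csum_sub|].
  rewrite Rmult_assoc. apply sumR_le_const. intros j Hj.
  eapply Rle_trans; [apply Cabs_Csum_sub|]. apply sumR_le_const. intros k Hk.
  rewrite (zc_vsub_chain y w z j), (zc_vsub_chain y w z k).
  eapply Rle_trans; [apply Cmul_quadratic_increment_le|].
  destruct (Ha j k Hj Hk) as [Ha1 Ha2].
  pose proof (Cabs_zc_le n (vsub w z) j Hj). pose proof (Cabs_zc_le n (vsub w z) k Hk).
  pose proof (Cabs_zc_le n (vsub y w) j Hj). pose proof (Cabs_zc_le n (vsub y w) k Hk).
  pose proof (Cabs_nonneg (zc (vsub w z) j)). pose proof (Cabs_nonneg (zc (vsub w z) k)).
  pose proof (Cabs_nonneg (zc (vsub y w) j)). pose proof (Cabs_nonneg (zc (vsub y w) k)).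
  pose proof (Cabs_nonneg (a y j k)). pose proof (Cabs_nonneg (Csub (a y j k) (a w j k))).
  set (V := vnorm (2 * n) (vsub y w)) in *. set (Z := vnorm (2 * n) (vsub w z)) in *.
  set (zj := Cabs (zc (vsub w z) j)) in *. set (zk := Cabs (zc (vsub w z) k)) in *.
  set (vj := Cabs (zc (vsub y w) j)) in *. set (vk := Cabs (zc (vsub y w) k)) in *.
  assert (Cabs (Csub (a y j k) (a w j k)) * zj * zk <= (2 * eta) * (2 * Z) * (2 * Z))
    by (apply Rmult_le_compat; [nra|lra|apply Rmult_le_compat; lra|lra]).
  assert (Cabs (a y j k) * (vj * (zk + vk) + zj * vk)
          <= Aa * ((2 * V) * (2 * Z + 2 * V) + (2 * Z) * (2 * V)))
    by (apply Rmult_le_compat; [lra|nra|lra|]; apply Rplus_le_compat; apply Rmult_le_compat; lra).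
  lra.
Qed.

Lemma near_diagonal_increment_le grad a t L Gam Aa eta :
  0 <= L -> 0 <= Aa -> 0 < dot (2 * n) (grad w) (grad w) ->
  (forall i, (i < 2 * n)%nat -> Rabs (grad y i - grad w i) <= L * vnorm (2 * n) (vsub y w)) ->
  vnorm (2 * n) (grad w) <= Gam ->
  (forall j k, (j < n)%nat -> (k < n)%nat ->
     Cabs (a y j k) <= Aa /\ Cabs (Csub (a y j k) (a w j k)) <= 2 * eta) ->
  Cabs (Csub (Cadd (pair_drho n grad y z) (Qform n a y (vsub y z)))
             (Cadd (Cadd (pair_drho n grad w z) (Qform n a w (vsub w z))) (- t / 2, 0))) <=
  (2 * INR n * (L + Gam) + 8 * INR n * INR n * Aa) *
    (vnorm (2 * n) (vsub y w) * vnorm (2 * n) (vsub w z)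
     + vnorm (2 * n) (vsub y w) * vnorm (2 * n) (vsub y w)
     + vnorm (2 * n) (vsub y (vadd w (vscal t (Nfield (2 * n) grad w)))))
  + 8 * INR n * INR n * eta * (vnorm (2 * n) (vsub w z) * vnorm (2 * n) (vsub w z)).
Proof.
  intros HL HA HD Hlip HG Ha. set (tau := vscal t (Nfield (2 * n) grad w)).
  rewrite <- (pair_drho_normal_step n grad w t HD). fold tau.
  replace (Csub (Cadd (pair_drho n grad y z) (Qform n a y (vsub y z)))
     (Cadd (Cadd (pair_drho n grad w z) (Qform n a w (vsub w z)))
        (Csum n (fun j => Cmul (drho_j grad w j) (zc tau j)))))
    with (Cadd (Csub (pair_drho n grad y z)
                     (Cadd (pair_drho n grad w z) (Csum n (fun j => Cmul (drho_j grad w j) (zc tau j)))))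
               (Csub (Qform n a y (vsub y z)) (Qform n a w (vsub w z))))
    by (apply Cpx_eq; unfold Csub, Cadd; simpl; ring).
  eapply Rle_trans; [apply Cabs_triang|].
  pose proof (pair_drho_increment_le grad tau L Gam Hlip HG).
  pose proof (Qform_increment_le a Aa eta Ha).
  pose proof (pos_INR n). pose proof (vnorm_nonneg (2 * n) (grad w)).
  pose proof (vnorm_nonneg (2 * n) (vsub y w)). pose proof (vnorm_nonneg (2 * n) (vsub w z)).
  pose proof (vnorm_nonneg (2 * n) (vsub y (vadd w tau))).
  set (nn := INR n) in *. set (V := vnorm (2 * n) (vsub y w)) in *.
  set (Z := vnorm (2 * n) (vsub w z)) in *. set (E := vnorm (2 * n) (vsub y (vadd w tau))) in *.
  assert (0 <= nn * Gam * (V * Z + V * V)) by (repeat apply Rmult_le_pos; nra).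
  assert (0 <= nn * L * E) by (repeat apply Rmult_le_pos; lra).
  assert (0 <= nn * nn * Aa * (V * V + 2 * E)) by (repeat apply Rmult_le_pos; nra).
  assert ((2 * nn * (L + Gam) + 8 * nn * nn * Aa) * (V * Z + V * V + E) + 8 * nn * nn * eta * (Z * Z)
          = nn * (2 * L * V * Z + 2 * L * V * V + 2 * Gam * E)
            + nn * nn * (8 * eta * (Z * Z) + 8 * Aa * V * Z + 4 * Aa * V * V)
            + 2 * (nn * Gam * (V * Z + V * V)) + 2 * (nn * L * E)
            + 4 * (nn * nn * Aa * (V * V + 2 * E))) by ring.
  lra.
Qed.

End IncrementBounds.

Lemma increment_budget K C1 del kap c V Z E s Gm :
  0 <= K -> 1 <= C1 -> 0 <= V -> 0 <= Z -> 0 <= E -> 0 <= s -> 0 < c ->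
  0 <= kap <= c / 20 -> K * C1 * C1 * del <= 1 / 60 ->
  V <= C1 * s -> V <= C1 * del -> Z <= del -> E <= del * s -> c * (Z * Z) <= Gm ->
  K * (V * Z + V * V + E) + kap * (Z * Z) <= (Gm + s) / 20.
Proof.
  intros HK HC1 HV HZ HE Hs Hc Hkap Hdel HVs HVd HZd HEd HGm.
  assert (Hd : 0 <= del) by lra.
  assert (Hds : 0 <= del * s) by nra.
  assert (HC : del * s <= C1 * C1 * del * s).
  { replace (C1 * C1 * del * s) with ((C1 * C1) * (del * s)) by ring.
    rewrite <- (Rmult_1_l (del * s)) at 1. apply Rmult_le_compat_r; nra. }
  assert (V * Z <= C1 * C1 * del * s).
  { apply Rle_trans with ((C1 * s) * del); [apply Rmult_le_compat; lra|nra]. }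
  assert (V * V <= C1 * C1 * del * s).
  { apply Rle_trans with ((C1 * s) * (C1 * del)); [apply Rmult_le_compat; lra|nra]. }
  assert (K * (V * Z + V * V + E) <= 3 * (K * C1 * C1 * del) * s) by nra.
  assert (kap * (Z * Z) <= c / 20 * (Z * Z)) by nra.
  assert (c / 20 * (Z * Z) <= Gm / 20) by lra.
  nra.
Qed.

Lemma step_below a b lam C1 : 0 < a -> 0 < b -> 0 < lam -> 1 <= C1 ->
  exists t1, 0 < t1 /\ t1 <= a /\ t1 <= b /\ C1 * t1 <= lam.
Proof.
  intros Ha Hb Hl HC. exists (Rmin a (Rmin b (lam / C1))).
  pose proof (Rmin_l a (Rmin b (lam / C1))). pose proof (Rmin_r a (Rmin b (lam / C1))).
  pose proof (Rmin_l b (lam / C1)). pose proof (Rmin_r b (lam / C1)).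
  assert (0 < lam / C1) by (apply Rdiv_lt_0_compat; lra).
  split; [repeat apply Rmin_pos; lra|]. split; [lra|]. split; [lra|].
  apply Rle_trans with (C1 * (lam / C1)); [apply Rmult_le_compat_l; lra|right; field; lra].
Qed.

(** * The Lanzani--Stein denominator along the flow *)

Lemma vnorm_Nfield m grad x :
  0 < vnorm m (grad x) -> vnorm m (Nfield m grad x) = / vnorm m (grad x).
Proof.
  intros Hg. unfold Nfield. rewrite vnorm_scal, <- vnorm_sq, Rabs_Ropp, Rabs_inv.
  rewrite Rabs_right by (apply Rle_ge, Rmult_le_pos; apply vnorm_nonneg). field. lra.
Qed.

Section Flow.
Variables (n : nat) (U : pt -> Prop) (rho : pt -> R) (grad : pt -> pt) (hess : pt -> nat -> pt)
  (Phi : R -> pt -> pt).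
Hypothesis HS : SPC_setup n U rho grad hess.
Hypothesis HF : is_flow n U rho grad Phi.
Hypothesis HE : flow_expansion n U rho grad Phi.

Lemma flow_step : exists C1, 1 <= C1 /\ forall eps, 0 < eps <= 1 -> exists t1, 0 < t1 /\
  forall t w, - t1 < t < 0 -> bD n U rho w ->
    is_pt (2 * n) (Phi t w) /\
    vnorm (2 * n) (vsub (Phi t w) (vadd w (vscal t (Nfield (2 * n) grad w)))) <= eps * Rabs t /\
    vnorm (2 * n) (vsub (Phi t w) w) <= C1 * Rabs t.
Proof.
  destruct (grad_bounded_below_on_bD _ _ _ _ _ HS) as [cg [Hcg Hlow]].
  destruct HF as [T [W [HT [_ [HbW [_ Hflow]]]]]].
  exists (/ cg + 1). split; [pose proof (Rinv_0_lt_compat cg Hcg); lra|].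
  intros eps Heps. destruct (HE eps ltac:(lra)) as [d [Hd Hexp]].
  exists (Rmin d T). split; [apply Rmin_pos; lra|].
  intros t w Ht Hw. pose proof (Rmin_l d T). pose proof (Rmin_r d T).
  assert (Habs : Rabs t < Rmin d T) by (rewrite Rabs_left; lra).
  set (tau := vscal t (Nfield (2 * n) grad w)).
  assert (Hexp' : vnorm (2 * n) (vsub (Phi t w) (vadd w tau)) <= eps * Rabs t)
    by (apply Hexp; auto; lra).
  assert (Htau : vnorm (2 * n) tau <= / cg * Rabs t).
  { pose proof (Hlow w Hw). unfold tau. rewrite vnorm_scal, vnorm_Nfield by lra.
    rewrite Rmult_comm. apply Rmult_le_compat_r; [apply Rabs_pos|].
    apply Rinv_le_contravar; lra. }
  split; [apply (U_is_pt n U rho grad hess HS), (Hflow w (HbW w Hw)); lra|]. split; [exact Hexp'|].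
  replace (vsub (Phi t w) w) with (vadd tau (vsub (Phi t w) (vadd w tau)))
    by (apply functional_extensionality; intros; unfold tau, vadd, vsub; ring).
  eapply Rle_trans; [apply vnorm_triang|]. pose proof (Rabs_pos t). nra.
Qed.

End Flow.

Section Denominator.
Variables (n : nat) (U : pt -> Prop) (rho : pt -> R) (grad : pt -> pt) (hess : pt -> nat -> pt)
  (Phi : R -> pt -> pt) (G : pt -> Prop) (g : pt -> pt -> Cpx)
  (r c : R) (a : pt -> nat -> nat -> Cpx).
Hypothesis HS : SPC_setup n U rho grad hess.
Hypothesis HF : is_flow n U rho grad Phi.
Hypothesis HE : flow_expansion n U rho grad Phi.
Hypothesis HGo : open_in (2 * n) G.
Hypothesis HDG : forall x, Dbar n U rho x -> G x.
Hypothesis Hg_fst : cont2_on (2 * n) G (fun w z => fst (g w z)).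
Hypothesis Hg_snd : cont2_on (2 * n) G (fun w z => snd (g w z)).
Hypothesis Hr : 0 < r.
Hypothesis Ha : forall j k, (j < n)%nat -> (k < n)%nat ->
  cont_on (2 * n) G (fun w => fst (a w j k)) /\ cont_on (2 * n) G (fun w => snd (a w j k)).
Hypothesis Hnear : forall w z, G w -> G z -> vnorm (2 * n) (vsub w z) < r ->
  g w z = Cadd (pair_drho n grad w z) (Qform n a w (vsub w z)).
Hypothesis Hc : 0 < c.
Hypothesis HRe : forall w z, Dbar n U rho z -> bD n U rho w ->
  fst (g w z) >= c * (- rho z + vnorm (2 * n) (vsub w z) ^ 2).

Lemma bD_G x : bD n U rho x -> G x.
Proof. intros Hx. apply HDG, Hx. Qed.

Lemma Re_g_lower_bound w z : bD n U rho w -> bD n U rho z ->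
  c * (vnorm (2 * n) (vsub w z) * vnorm (2 * n) (vsub w z)) <= fst (g w z).
Proof.
  intros Hw Hz. specialize (HRe w z (proj1 Hz) Hw).
  pose proof (bD_rho_nonpos n U rho grad hess HS z Hz).
  assert (0 <= c * - rho z) by (apply Rmult_le_pos; lra).
  replace (vnorm (2 * n) (vsub w z) ^ 2)
    with (vnorm (2 * n) (vsub w z) * vnorm (2 * n) (vsub w z)) in HRe by ring.
  lra.
Qed.

Lemma coefficients_near_bD eta : 0 < eta -> exists Aa lam, 0 <= Aa /\ 0 < lam /\
  forall w y, bD n U rho w -> is_pt (2 * n) y -> vnorm (2 * n) (vsub y w) < lam ->
    G y /\ forall j k, (j < n)%nat -> (k < n)%nat ->
      Cabs (a y j k) <= Aa /\ Cabs (Csub (a y j k) (a w j k)) <= eta.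
Proof.
  intros Heta.
  set (ix := list_prod (list_prod (seq 0 n) (seq 0 n)) (true :: false :: nil)).
  assert (Hix : forall j k b, In (j, k, b) ix <-> (j < n)%nat /\ (k < n)%nat).
  { intros j k b. unfold ix. rewrite !in_prod_iff, !in_seq. destruct b; simpl; intuition lia. }
  set (f := fun (i : nat * nat * bool) w =>
         let '(j, k, b) := i in if b then fst (a w j k) else snd (a w j k)).
  assert (Hf : forall i, In i ix -> cont_on (2 * n) G (f i)).
  { intros [[j k] b] Hi. apply Hix in Hi. destruct (Ha j k (proj1 Hi) (proj2 Hi)). destruct b; auto. }
  pose proof (bD_seq_compact n U rho grad hess HS) as HK.
  destruct (bounded_family _ _ HK G bD_G ix f Hf) as [C HC].
  destruct (unif_cont_family _ _ HK G bD_G HGo ix f Hf (eta / 2)) as [lam [Hlam Hu]]; [lra|].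
  exists (2 * (Rabs C + eta)), lam. split; [pose proof (Rabs_pos C); lra|]. split; [exact Hlam|].
  intros w y Hw Hy Hd.
  destruct (Hu w y Hw Hy Hd) as [HGy Hu']. split; [exact HGy|]. intros j k Hj Hk.
  pose proof (Hu' (j, k, true) (proj2 (Hix j k true) (conj Hj Hk))) as Hre.
  pose proof (Hu' (j, k, false) (proj2 (Hix j k false) (conj Hj Hk))) as Him.
  pose proof (HC w Hw (j, k, true) (proj2 (Hix j k true) (conj Hj Hk))) as Bre.
  pose proof (HC w Hw (j, k, false) (proj2 (Hix j k false) (conj Hj Hk))) as Bim.
  simpl in Hre, Him, Bre, Bim. pose proof (Rle_abs C).
  pose proof (Rabs_triang_inv (fst (a y j k)) (fst (a w j k))).
  pose proof (Rabs_triang_inv (snd (a y j k)) (snd (a w j k))).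
  split; eapply Rle_trans; try apply Cabs_le_abs_sum; unfold Csub; simpl; lra.
Qed.

Lemma flow_increment_small eta : 0 < eta -> exists t2, 0 < t2 /\
  forall t w z, - t2 < t < 0 -> bD n U rho w -> bD n U rho z ->
    Cabs (Csub (g (Phi t w) z) (g w z)) <= eta.
Proof.
  intros Heta. pose proof (bD_seq_compact n U rho grad hess HS) as HK.
  destruct (seq_compact_unif_cont2 _ _ HK G bD_G HGo _ Hg_fst (eta / 2) ltac:(lra)) as [l1 [Hl1 H1]].
  destruct (seq_compact_unif_cont2 _ _ HK G bD_G HGo _ Hg_snd (eta / 2) ltac:(lra)) as [l2 [Hl2 H2]].
  destruct (flow_step n U rho grad hess Phi HS HF HE) as [C1 [HC1 Hstep]].
  destruct (Hstep 1 ltac:(lra)) as [t1 [Ht1 Hflow]].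
  destruct (step_below t1 t1 (Rmin l1 l2) C1) as [t2 [Ht2 [Ht21 [_ Ht2l]]]];
    try apply Rmin_pos; try lra.
  exists t2. split; [exact Ht2|]. intros t w z Ht Hw Hz.
  pose proof (Rmin_l l1 l2). pose proof (Rmin_r l1 l2).
  destruct (Hflow t w ltac:(lra) Hw) as [Hy [_ HV]]. rewrite Rabs_left in HV by lra.
  assert (Hd : vnorm (2 * n) (vsub (Phi t w) w) < Rmin l1 l2)
    by (apply Rle_lt_trans with (C1 * - t); [lra|];
        apply Rlt_le_trans with (C1 * t2); [apply Rmult_lt_compat_l|]; lra).
  destruct (H1 w z (Phi t w) Hw Hz Hy ltac:(lra)) as [_ Hre].
  destruct (H2 w z (Phi t w) Hw Hz Hy ltac:(lra)) as [_ Him].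
  eapply Rle_trans; [apply Cabs_le_abs_sum|]. unfold Csub. simpl. lra.
Qed.

Lemma local_bounds_near_bD eta : 0 < eta -> exists L Gam Aa lam,
  0 <= L /\ 0 <= Gam /\ 0 <= Aa /\ 0 < lam /\
  forall w y, bD n U rho w -> is_pt (2 * n) y -> vnorm (2 * n) (vsub y w) < lam ->
    G y /\ 0 < dot (2 * n) (grad w) (grad w) /\ vnorm (2 * n) (grad w) <= Gam /\
    (forall i, (i < 2 * n)%nat -> Rabs (grad y i - grad w i) <= L * vnorm (2 * n) (vsub y w)) /\
    (forall j k, (j < n)%nat -> (k < n)%nat ->
       Cabs (a y j k) <= Aa /\ Cabs (Csub (a y j k) (a w j k)) <= 2 * eta).
Proof.
  intros Heta.
  destruct (grad_lipschitz_near_bD n U rho grad hess HS) as [lamH [L [HlamH [HL Hlip]]]].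
  destruct (grad_bounded_on_bD n U rho grad hess HS) as [Gam [HGam0 HGam]].
  destruct (coefficients_near_bD eta Heta) as [Aa [lamA [HAa [HlamA Hcoefs]]]].
  exists L, Gam, Aa, (Rmin lamH lamA).
  split; [exact HL|]. split; [exact HGam0|]. split; [exact HAa|]. split; [apply Rmin_pos; auto|].
  intros w y Hw Hy Hd. pose proof (Rmin_l lamH lamA). pose proof (Rmin_r lamH lamA).
  destruct (Hcoefs w y Hw Hy ltac:(lra)) as [HGy Hay].
  split; [exact HGy|]. split.
  { rewrite <- vnorm_sq. pose proof (grad_bounded_below_on_bD n U rho grad hess HS) as [cg [Hcg Hlow]].
    pose proof (Hlow w Hw). nra. }
  split; [auto|]. split; [apply (Hlip w y Hw Hy); lra|].
  intros j k Hj Hk. destruct (Hay j k Hj Hk). split; lra.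
Qed.

Lemma near_diagonal_increment : exists r0 t1, 0 < r0 /\ 0 < t1 /\
  forall t w z, - t1 < t < 0 -> bD n U rho w -> bD n U rho z -> vnorm (2 * n) (vsub w z) < r0 ->
    Cabs (Csub (g (Phi t w) z) (Cadd (g w z) (- t / 2, 0))) <= (Cabs (g w z) + - t) / 20.
Proof.
  set (nn := INR n). assert (Hnn : 0 <= nn) by apply pos_INR.
  (* [eta] makes the quadratic error [8 n^2 eta |w - z|^2] at most [Re g(w,z) / 20] *)
  set (eta := c / (160 * (nn * nn + 1))).
  assert (Heta : 0 < eta) by (apply Rdiv_lt_0_compat; nra).
  assert (Hkap : 0 <= 8 * nn * nn * eta <= c / 20).
  { split; [apply Rmult_le_pos; [nra|lra]|].
    unfold eta. apply (Rmult_le_reg_r (160 * (nn * nn + 1))); [nra|]. field_simplify; nra. }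
  destruct (local_bounds_near_bD eta Heta) as [L [Gam [Aa [lam [HL [HGam [HAa [Hlam Hloc]]]]]]]].
  destruct (flow_step n U rho grad hess Phi HS HF HE) as [C1 [HC1 Hstep]].
  set (K := 2 * nn * (L + Gam) + 8 * nn * nn * Aa). assert (HK : 0 <= K) by (unfold K; nra).
  set (del := 1 / (60 * (K * C1 * C1 + 1))).
  assert (Hdel : 0 < del) by (apply Rdiv_lt_0_compat; nra).
  assert (Hbudget : K * C1 * C1 * del <= 1 / 60).
  { unfold del. apply (Rmult_le_reg_r (60 * (K * C1 * C1 + 1))); [nra|]. field_simplify; nra. }
  (* [del] bounds [|w - z|], the step [C1 |t|] and the flow error so that the linear part
     of the error is at most [|t| / 20] *)
  destruct (Hstep (Rmin 1 del)) as [t' [Ht' Hflow]]; [split; [apply Rmin_pos|apply Rmin_l]; lra|].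
  destruct (step_below t' del (Rmin lam (r / 2)) C1) as [t1 [Ht1 [Ht1' [Ht1d Ht1l]]]];
    try apply Rmin_pos; try lra.
  pose proof (Rmin_l lam (r / 2)). pose proof (Rmin_r lam (r / 2)).
  exists (Rmin del (r / 2)), t1. split; [apply Rmin_pos; lra|]. split; [exact Ht1|].
  intros t w z Ht Hw Hz Hwz. pose proof (Rmin_l del (r / 2)). pose proof (Rmin_r del (r / 2)).
  destruct (Hflow t w ltac:(lra) Hw) as [Hy [HEy HVy]]. rewrite Rabs_left in HEy, HVy by lra.
  set (y := Phi t w) in *.
  assert (HV : vnorm (2 * n) (vsub y w) < C1 * t1)
    by (apply Rle_lt_trans with (C1 * - t); [lra|apply Rmult_lt_compat_l; lra]).
  destruct (Hloc w y Hw Hy ltac:(lra)) as [HGy [HD [HGw [Hlip Ha']]]].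
  assert (Hyz : vnorm (2 * n) (vsub y z) < r) by (pose proof (vnorm_sub_triang (2 * n) y w z); lra).
  rewrite (Hnear y z HGy (bD_G z Hz) Hyz), (Hnear w z (bD_G w Hw) (bD_G z Hz) ltac:(lra)).
  eapply Rle_trans; [apply (near_diagonal_increment_le n y w z grad a t L Gam Aa eta); auto|].
  rewrite <- (Hnear w z (bD_G w Hw) (bD_G z Hz) ltac:(lra)). fold nn K.
  apply (increment_budget K C1 del (8 * nn * nn * eta) c); auto; try apply vnorm_nonneg; try lra.
  - apply Rle_trans with (C1 * t1); [lra|apply Rmult_le_compat_l; lra].
  - apply Rle_trans with (Rmin 1 del * - t); [lra|]. apply Rmult_le_compat_r; [lra|apply Rmin_r].
  - eapply Rle_trans; [apply Re_g_lower_bound; auto|].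
    apply Rle_trans with (Rabs (fst (g w z))); [apply Rle_abs|apply Cabs_ge_fst].
Qed.

Lemma near_diagonal_comparable : exists r0 t1, 0 < r0 /\ 0 < t1 /\
  forall t w z, - t1 < t < 0 -> bD n U rho w -> bD n U rho z -> vnorm (2 * n) (vsub w z) < r0 ->
    (Cabs (g w z) + - t) / 4 <= Cabs (g (Phi t w) z) /\
    Cabs (g (Phi t w) z) <= 2 * (Cabs (g w z) + - t).
Proof.
  destruct near_diagonal_increment as [r0 [t1 [Hr0 [Ht1 Hinc]]]].
  exists r0, t1. split; [exact Hr0|]. split; [exact Ht1|]. intros t w z Ht Hw Hz Hwz.
  rewrite <- (Cadd_Csub (Cadd (g w z) (- t / 2, 0)) (g (Phi t w) z)).
  apply Cabs_add_pos_real_perturb; [|lra|apply Hinc; auto].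
  pose proof (Re_g_lower_bound w z Hw Hz). pose proof (vnorm_nonneg (2 * n) (vsub w z)). nra.
Qed.

Lemma off_diagonal_comparable r0 : 0 < r0 -> exists t2, 0 < t2 /\
  forall t w z, - t2 < t < 0 -> bD n U rho w -> bD n U rho z -> r0 <= vnorm (2 * n) (vsub w z) ->
    (Cabs (g w z) + - t) / 4 <= Cabs (g (Phi t w) z) /\
    Cabs (g (Phi t w) z) <= 2 * (Cabs (g w z) + - t).
Proof.
  intros Hr0. assert (Hm : 0 < c * r0 * r0) by (repeat apply Rmult_lt_0_compat; lra).
  destruct (flow_increment_small (c * r0 * r0 / 2)) as [t2 [Ht2 Hsmall]]; [lra|].
  exists (Rmin t2 (c * r0 * r0)). split; [apply Rmin_pos; lra|].
  intros t w z Ht Hw Hz Hwz. pose proof (Rmin_l t2 (c * r0 * r0)). pose proof (Rmin_r t2 (c * r0 * r0)).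
  (* away from the diagonal [|g(w,z)| >= c r0^2] dominates both [|t|] and the increment *)
  assert (c * (r0 * r0) <= Cabs (g w z)).
  { apply Rle_trans with (fst (g w z)); [|eapply Rle_trans; [apply Rle_abs|apply Cabs_ge_fst]].
    eapply Rle_trans; [|apply Re_g_lower_bound; auto].
    apply Rmult_le_compat_l; [lra|apply Rmult_le_compat; lra]. }
  rewrite <- (Cadd_Csub (g w z) (g (Phi t w) z)).
  apply Cabs_small_perturb; [|lra].
  apply Rle_trans with (c * r0 * r0 / 2); [apply Hsmall; auto; lra|lra].
Qed.

Lemma flow_increment_comparable : exists t0, 0 < t0 /\
  forall t w z, - t0 < t < 0 -> bD n U rho w -> bD n U rho z ->
    (Cabs (g w z) + - t) / 4 <= Cabs (g (Phi t w) z) /\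
    Cabs (g (Phi t w) z) <= 2 * (Cabs (g w z) + - t).
Proof.
  destruct near_diagonal_comparable as [r0 [t1 [Hr0 [Ht1 Hnear']]]].
  destruct (off_diagonal_comparable r0 Hr0) as [t2 [Ht2 Hfar]].
  exists (Rmin t1 t2). split; [apply Rmin_pos; lra|].
  intros t w z Ht Hw Hz. pose proof (Rmin_l t1 t2). pose proof (Rmin_r t1 t2).
  destruct (Rlt_or_le (vnorm (2 * n) (vsub w z)) r0); [apply Hnear'|apply Hfar]; auto; lra.
Qed.

End Denominator.

Theorem mainTheorem9 (n : nat) (U : pt -> Prop) (rho : pt -> R)
    (grad : pt -> pt) (hess : pt -> nat -> pt)
    (Phi : R -> pt -> pt) (G : pt -> Prop) (g : pt -> pt -> Cpx) :
  (2 <= n)%nat ->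
  SPC_setup n U rho grad hess ->
  is_flow n U rho grad Phi ->
  flow_expansion n U rho grad Phi ->
  LS_denominator n U rho grad G g ->
  exists t0 A B, 0 < t0 /\ 0 < A /\ 0 < B /\
    forall t w z, - t0 < t < 0 -> bD n U rho w -> bD n U rho z ->
      A * (Cabs (g w z) + Rabs t) <= Cabs (g (Phi t w) z) /\
      Cabs (g (Phi t w) z) <= B * (Cabs (g w z) + Rabs t).
Proof.
  intros _ HS HF HE HL.
  destruct HL as [HGo [HDG [_ [Hg1 [Hg2 [_ [_ [[r [a [Hr [Ha Hnear]]]] [[c [Hc HRe]] _]]]]]]]]].
  destruct (flow_increment_comparable n U rho grad hess Phi G g r c a) as [t0 [Ht0 Hcomp]]; auto.
  exists t0, (1 / 4), 2. split; [exact Ht0|]. split; [lra|]. split; [lra|].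
  intros t w z Ht Hw Hz. rewrite Rabs_left by lra.
  destruct (Hcomp t w z Ht Hw Hz). lra.
Qed.
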